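(* Let $S$ be a functional PTS specification. Let $\Gamma$ be an object context of $\lambda\Pi/S$ whose types are $\lambda\Pi^-/S$ terms, and let $M,A$ be terms containing no $\mathsf{Kind}$-level $\beta$-redex. Then: (1) if $\mathrm{WF}_{\lambda\Pi/S}(\Gamma)$ then $\mathrm{WF}_{\lambda S^*}(\psi(\Gamma))$; (2) if $\Gamma\vdash_{\lambda\Pi/S}M:A$ and $\Gamma\vdash_{\lambda\Pi/S}A:\mathsf{Type}$, then $\psi(\Gamma)\vdash_{\lambda S^*}\varphi(M):\psi(A)$; (3) if $\Gamma\vdash_{\lambda\Pi/S}A:\mathsf{Type}$ then $\psi(\Gamma)\vdash_{\lambda S^*}\psi(A):s$ for some sort $s\in\mathcal S^*$.
   Context: PTS: specification $S=(\mathcal S,\mathcal A,\mathcal R)$ with sorts, axioms $(s_1:s_2)$, rules $(s_1,s_2,s_3)$; functional means $\mathcal A,\mathcal R$ are functional relations; $\lambda S$ has terms $s\mid x\mid M\,N\mid\lambda x:A.M\mid\Pi x:A.B$ and the standard PTS typing rules (axiom rule from $\mathcal A$, product rule from $\mathcal R$, abstraction, application, conversion modulo $\equiv_\beta$). A sort $s$ is a top-sort if there is no $s'$ with $(s:s')\in\mathcal A$. The minimal completion $S^*=(\mathcal S^*,\mathcal A^*,\mathcal R^* )$: $\mathcal S^*=\mathcal S\cup\{\tau\}$ with $\tau\notin\mathcal S$; $\mathcal A^*=\mathcal A\cup\{(s_1:\tau)\mid s_1\in\mathcal S$ a top-sort of $S\}$; $\mathcal R^*=\mathcal R\cup\{(s_1,s_2,\tau)\mid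 s_1,s_2\in\mathcal S^*$, no $s_3$ with $(s_1,s_2,s_3)\in\mathcal R\}$. $\lambda\Pi/S$: the $\lambda\Pi$ calculus (sorts $\mathsf{Type},\mathsf{Kind}$, axiom $\mathsf{Type}:\mathsf{Kind}$, rules $(\mathsf{Type},\mathsf{Type}),(\mathsf{Type},\mathsf{Kind})$) with signature $\Sigma_S$ (variables declared in it may be used in any context) declaring $u_s:\mathsf{Type}$, $\varepsilon_s:u_s\to\mathsf{Type}$ ($s\in\mathcal S$), $\dot s_1:u_{s_2}$ ($(s_1:s_2)\in\mathcal A$), $\dot\pi_{s_1s_2s_3}:\Pi\alpha:u_{s_1}.(\varepsilon_{s_1}\alpha\to u_{s_2})\to u_{s_3}$ ($(s_1,s_2,s_3)\in\mathcal R$), and conversion modulo $\equiv_{\beta R}$, the congruence generated by $\beta$ and the rewrite rules $\varepsilon_{s_2}\dot s_1\leadsto u_{s_1}$, $\varepsilon_{s_3}(\dot\pi_{s_1s_2s_3}AB)\leadsto\Pi x:\varepsilon_{s_1}A.\varepsilon_{s_2}(B\,x)$. A term $P$ of type $C$ in context $\Delta$ is at the level of $\mathsf{Kind}$ if $\Delta\vdash C:\mathsf{Kind}$; a $\mathsf{Kind}$-level $\beta$-redex is a subterm $(\lambda x:B.C)\,P$ at the level of $\mathsf{Kind}$; $\lambda\Pi^-/S$ terms are well-typed $\lambda\Pi/S$ terms with no $\mathsf{Kind}$-level $\beta$-redex. $\Gamma$ is an object context if $\Gamma\vdash_{\lambda\Pi/S}A:\mathsf{Type}$ for every $(x:A)\in\Gamma$;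 for $\Gamma=(x_1:A_1,\dots,x_n:A_n)$, $\psi(\Gamma)=(x_1:\psi(A_1),\dots,x_n:\psi(A_n))$. Inverse translations (partial): $\varphi(\dot s)=s$, $\varphi(\dot\pi_{s_1s_2s_3})=\lambda\alpha:s_1.\lambda\beta:(\alpha\to s_2).\Pi x:\alpha.\beta\,x$, $\varphi(x)=x$, $\varphi(M\,N)=\varphi(M)\varphi(N)$, $\varphi(\lambda x:A.M)=\lambda x:\psi(A).\varphi(M)$; $\psi(u_s)=s$, $\psi(\varepsilon_sM)=\varphi(M)$, $\psi(\Pi x:A.B)=\Pi x:\psi(A).\psi(B)$. *)

From Stdlib Require Import List Relations PeanoNat.
Import ListNotations.

(* Generic pre-terms over a type K of constants (sorts / signature symbols).
   Variables are de Bruijn indices; Lam A M = \x:A.M, Pi A B = Pi x:A.B. *)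
Inductive term (K : Type) : Type :=
| Cst : K -> term K
| Var : nat -> term K
| App : term K -> term K -> term K
| Lam : term K -> term K -> term K
| Pi  : term K -> term K -> term K.
Arguments Cst {K}. Arguments Var {K}. Arguments App {K}.
Arguments Lam {K}. Arguments Pi {K}.

Fixpoint lift_rec {K} (k n : nat) (t : term K) : term K :=
  match t with
  | Cst c => Cst c
  | Var i => if Nat.leb k i then Var (i + n) else Var i
  | App u v => App (lift_rec k n u) (lift_rec k n v)
  | Lam A M => Lam (lift_rec k n A) (lift_rec (S k) n M)
  | Pi A B => Pi (lift_rec k n A) (lift_rec (S k) n B)
  end.
Definition lift {K} (n : nat) (t : term K) : term K := lift_rec 0 n t.

Fixpoint subst_rec {K} (N : term K) (k : nat) (t : term K) : term K :=
  match t with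
  | Cst c => Cst c
  | Var i => match Nat.compare i k with
             | Lt => Var i
             | Eq => lift k N
             | Gt => Var (pred i)
             end
  | App u v => App (subst_rec N k u) (subst_rec N k v)
  | Lam A M => Lam (subst_rec N k A) (subst_rec N (S k) M)
  | Pi A B => Pi (subst_rec N k A) (subst_rec N (S k) B)
  end.
Definition subst {K} (N t : term K) : term K := subst_rec N 0 t.

Section Reduction.
Variable K : Type.
Variable hd : term K -> term K -> Prop.

Inductive step : term K -> term K -> Prop :=
| st_beta A M N : step (App (Lam A M) N) (subst N M)
| st_head t u : hd t u -> step t u
| st_appl u u' v : step u u' -> step (App u v) (App u' v)
| st_appr u v v' : step v v' -> step (App u v) (App u v')
| st_laml A A' M : step A A' -> step (Lam A M) (Lam A' M)
| st_lamr A M M' : step M M' -> step (Lam A M) (Lam A M')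
| st_pil A A' B : step A A' -> step (Pi A B) (Pi A' B)
| st_pir A B B' : step B B' -> step (Pi A B) (Pi A B').

Definition conv : term K -> term K -> Prop := clos_refl_sym_trans (term K) step.
End Reduction.

(* Generic typing: a PTS (sorts [IsSort], axioms [Ax], rules [Rl]) extended
   with a signature [Sig] (constant c has closed type T) and conversion
   modulo beta + [hd].  [wf G] is well-formedness of contexts; the head of
   a context list is the most recently declared variable. *)
Section Typing.
Variable K : Type.
Variable IsSort : K -> Prop.
Variable Ax : K -> K -> Prop.
Variable Rl : K -> K -> K -> Prop.
Variable Sig : K -> term K -> Prop.
Variable hd : term K -> term K -> Prop.

Inductive wf : list (term K) -> Prop :=
| wf_nil : wf []
| wf_cons G A s : IsSort s -> typ G A (Cst s) -> wf (A :: G)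
with typ : list (term K) -> term K -> term K -> Prop :=
| t_sort G s1 s2 : wf G -> Ax s1 s2 -> typ G (Cst s1) (Cst s2)
| t_sig G c T : wf G -> Sig c T -> typ G (Cst c) T
| t_var G n A : wf G -> nth_error G n = Some A -> typ G (Var n) (lift (S n) A)
| t_pi G A B s1 s2 s3 :
    Rl s1 s2 s3 -> typ G A (Cst s1) -> typ (A :: G) B (Cst s2) ->
    typ G (Pi A B) (Cst s3)
| t_lam G A M B s :
    IsSort s -> typ (A :: G) M B -> typ G (Pi A B) (Cst s) ->
    typ G (Lam A M) (Pi A B)
| t_app G M N A B :
    typ G M (Pi A B) -> typ G N A -> typ G (App M N) (subst N B)
| t_conv G M A B s :
    typ G M A -> IsSort s -> typ G B (Cst s) -> conv K hd A B -> typ G M B.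
End Typing.

Definition functional_spec {Srt : Type} (Ax : Srt -> Srt -> Prop)
  (Rl : Srt -> Srt -> Srt -> Prop) : Prop :=
  (forall s s1 s2, Ax s s1 -> Ax s s2 -> s1 = s2) /\
  (forall s1 s2 s3 s3', Rl s1 s2 s3 -> Rl s1 s2 s3' -> s3 = s3').

Definition top_sort {Srt : Type} (Ax : Srt -> Srt -> Prop) (s : Srt) : Prop :=
  ~ exists s', Ax s s'.

(* Minimal completion S^*: sorts [option Srt], with [None] = tau. *)
Definition starAx {Srt : Type} (Ax : Srt -> Srt -> Prop)
  (a b : option Srt) : Prop :=
  match a, b with
  | Some s1, Some s2 => Ax s1 s2
  | Some s1, None => top_sort Ax s1
  | None, _ => False
  end.

Definition starRl {Srt : Type} (Rl : Srt -> Srt -> Srt -> Prop)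
  (a b c : option Srt) : Prop :=
  match c with
  | Some s3 => exists s1 s2, a = Some s1 /\ b = Some s2 /\ Rl s1 s2 s3
  | None => ~ exists s1 s2 s3, a = Some s1 /\ b = Some s2 /\ Rl s1 s2 s3
  end.

Definition typStar {Srt : Type} (Ax : Srt -> Srt -> Prop)
  (Rl : Srt -> Srt -> Srt -> Prop) :
  list (term (option Srt)) -> term (option Srt) -> term (option Srt) -> Prop :=
  typ (option Srt) (fun _ => True) (starAx Ax) (starRl Rl)
      (fun (_ : option Srt) (_ : term (option Srt)) => False)
      (fun _ _ => False).

Definition wfStar {Srt : Type} (Ax : Srt -> Srt -> Prop)
  (Rl : Srt -> Srt -> Srt -> Prop) : list (term (option Srt)) -> Prop :=
  wf (option Srt) (fun _ => True) (starAx Ax) (starRl Rl)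
     (fun (_ : option Srt) (_ : term (option Srt)) => False)
     (fun _ _ => False).

Inductive LPC (Srt : Type) : Type :=
| cType : LPC Srt
| cKind : LPC Srt
| cU : Srt -> LPC Srt
| cEps : Srt -> LPC Srt
| cDot : Srt -> LPC Srt
| cPi : Srt -> Srt -> Srt -> LPC Srt.
Arguments cType {Srt}. Arguments cKind {Srt}. Arguments cU {Srt}.
Arguments cEps {Srt}. Arguments cDot {Srt}. Arguments cPi {Srt}.

Definition LP_isSort {Srt : Type} (c : LPC Srt) : Prop := c = cType \/ c = cKind.
Definition LP_ax {Srt : Type} (c1 c2 : LPC Srt) : Prop := c1 = cType /\ c2 = cKind.
Definition LP_rl {Srt : Type} (c1 c2 c3 : LPC Srt) : Prop :=
  (c1 = cType /\ c2 = cType /\ c3 = cType) \/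
  (c1 = cType /\ c2 = cKind /\ c3 = cKind).

Definition LP_sig {Srt : Type} (Ax : Srt -> Srt -> Prop)
  (Rl : Srt -> Srt -> Srt -> Prop) (c : LPC Srt) (T : term (LPC Srt)) : Prop :=
  match c with
  | cU s => T = Cst cType
  | cEps s => T = Pi (Cst (cU s)) (Cst cType)
  | cDot s1 => exists s2, Ax s1 s2 /\ T = Cst (cU s2)
  | cPi s1 s2 s3 =>
      Rl s1 s2 s3 /\
      T = Pi (Cst (cU s1))
             (Pi (Pi (App (Cst (cEps s1)) (Var 0)) (Cst (cU s2)))
                 (Cst (cU s3)))
  | _ => False
  end.

Inductive LP_hd {Srt : Type} (Ax : Srt -> Srt -> Prop)
  (Rl : Srt -> Srt -> Srt -> Prop) : term (LPC Srt) -> term (LPC Srt) -> Prop :=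
| hd_ax s1 s2 : Ax s1 s2 ->
    LP_hd Ax Rl (App (Cst (cEps s2)) (Cst (cDot s1))) (Cst (cU s1))
| hd_rl s1 s2 s3 A B : Rl s1 s2 s3 ->
    LP_hd Ax Rl (App (Cst (cEps s3)) (App (App (Cst (cPi s1 s2 s3)) A) B))
          (Pi (App (Cst (cEps s1)) A)
              (App (Cst (cEps s2)) (App (lift 1 B) (Var 0)))).

Definition typLP {Srt : Type} (Ax : Srt -> Srt -> Prop)
  (Rl : Srt -> Srt -> Srt -> Prop) :
  list (term (LPC Srt)) -> term (LPC Srt) -> term (LPC Srt) -> Prop :=
  typ (LPC Srt) LP_isSort LP_ax LP_rl (LP_sig Ax Rl) (LP_hd Ax Rl).

Definition wfLP {Srt : Type} (Ax : Srt -> Srt -> Prop)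
  (Rl : Srt -> Srt -> Srt -> Prop) : list (term (LPC Srt)) -> Prop :=
  wf (LPC Srt) LP_isSort LP_ax LP_rl (LP_sig Ax Rl) (LP_hd Ax Rl).

(* Object context: G |- A : Type for every (x : A) in G (the declared type,
   read in G, is lifted past the later declarations). *)
Definition object_ctx {Srt : Type} (Ax : Srt -> Srt -> Prop)
  (Rl : Srt -> Srt -> Srt -> Prop) (G : list (term (LPC Srt))) : Prop :=
  forall n A, nth_error G n = Some A -> typLP Ax Rl G (lift (S n) A) (Cst cType).

(* sub_at G t D u : u occurs in t (t read in context G) at a position whose
   local context is D. *)
Inductive sub_at {K : Type} : list (term K) -> term K -> list (term K) -> term K -> Prop :=
| sa_here G t : sub_at G t G t
| sa_appl G u v D w : sub_at G u D w -> sub_at G (App u v) D w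
| sa_appr G u v D w : sub_at G v D w -> sub_at G (App u v) D w
| sa_laml G A M D w : sub_at G A D w -> sub_at G (Lam A M) D w
| sa_lamr G A M D w : sub_at (A :: G) M D w -> sub_at G (Lam A M) D w
| sa_pil G A B D w : sub_at G A D w -> sub_at G (Pi A B) D w
| sa_pir G A B D w : sub_at (A :: G) B D w -> sub_at G (Pi A B) D w.

Definition NoKindRedex {Srt : Type} (Ax : Srt -> Srt -> Prop)
  (Rl : Srt -> Srt -> Srt -> Prop) (G : list (term (LPC Srt)))
  (t : term (LPC Srt)) : Prop :=
  ~ exists D B C P T,
      sub_at G t D (App (Lam B C) P) /\
      typLP Ax Rl D (App (Lam B C) P) T /\
      typLP Ax Rl D T (Cst cKind).

Definition LPminus {Srt : Type} (Ax : Srt -> Srt -> Prop)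
  (Rl : Srt -> Srt -> Srt -> Prop) (G : list (term (LPC Srt)))
  (t : term (LPC Srt)) : Prop :=
  (exists T, typLP Ax Rl G t T) /\ NoKindRedex Ax Rl G t.

Fixpoint phi {Srt : Type} (t : term (LPC Srt)) : option (term (option Srt)) :=
  match t with
  | Cst (cDot s) => Some (Cst (Some s))
  | Cst (cPi s1 s2 s3) =>
      (* \alpha:s1. \beta:(alpha -> s2). Pi x:alpha. beta x *)
      Some (Lam (Cst (Some s1))
              (Lam (Pi (Var 0) (Cst (Some s2)))
                   (Pi (Var 1) (App (Var 1) (Var 0)))))
  | Var n => Some (Var n)
  | App M N =>
      match phi M, phi N with
      | Some a, Some b => Some (App a b)
      | _, _ => None
      end
  | Lam A M =>
      match psi A, phi M with
      | Some a, Some m => Some (Lam a m)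
      | _, _ => None
      end
  | _ => None
  end
with psi {Srt : Type} (t : term (LPC Srt)) : option (term (option Srt)) :=
  match t with
  | Cst (cU s) => Some (Cst (Some s))
  | App (Cst (cEps s)) M => phi M
  | Pi A B =>
      match psi A, psi B with
      | Some a, Some b => Some (Pi a b)
      | _, _ => None
      end
  | _ => None
  end.

Fixpoint psi_ctx {Srt : Type} (G : list (term (LPC Srt))) :
  option (list (term (option Srt))) :=
  match G with
  | [] => Some []
  | A :: G' =>
      match psi A, psi_ctx G' with
      | Some a, Some g => Some (a :: g)
      | _, _ => None
      end
  end.

(* The inverse translations are partial, so we work with a total translation [tr], which sends
   [eps_s] to the identity of [s] and agrees with [phi] and [psi] on the grammar of
   lambda-Pi^-/S.  Confluence of beta + R makes the syntactic level of a term (object, type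
   family or kind) invariant under conversion, so every derivation is stratified.  By induction
   on derivations, objects translate to well-typed terms of lambda S^*, domains of kinds
   translate to types, and a type family, once its Kind-level redexes are contracted by
   [knorm], is [eps_s], an abstraction over a translatable type, or of kind [Type] with a
   translatable image.  Finally, a well-typed term without Kind-level redexes lies in the
   lambda-Pi^- grammar, where [knorm] is the identity and [phi], [psi] coincide with [tr]. *)

From Pilot Require Import Defs.
From Stdlib Require Import List Relations PeanoNat Lia Classical ClassicalEpsilon.
Import ListNotations.

Arguments Nat.leb : simpl never.
Arguments Nat.compare : simpl never.

Ltac case_nat_tests := repeat match goal with
  | |- context [Nat.leb ?a ?b] => destruct (Nat.leb_spec a b)
  | |- context [Nat.compare ?a ?b] => destruct (Nat.compare_spec a b)
  end.

Section DeBruijn.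
Context {K : Type}.
Notation tm := (term K).

Lemma lift_rec0 (t : tm) k : lift_rec k 0 t = t.
Proof.
  revert k; induction t; intros; simpl; try (f_equal; auto; fail).
  case_nat_tests; f_equal; lia.
Qed.

Lemma lift0 (t : tm) : lift 0 t = t.
Proof. apply lift_rec0. Qed.

Lemma simpl_lift_rec (t : tm) n k p i : n <= k -> k <= n + i ->
  lift_rec k p (lift_rec n i t) = lift_rec n (p + i) t.
Proof.
  revert n k p i; induction t; intros; simpl; try (f_equal; auto with arith; fail).
  - case_nat_tests; simpl; case_nat_tests; f_equal; lia.
  - f_equal; auto. apply IHt2; lia.
  - f_equal; auto. apply IHt2; lia.
Qed.

Lemma lift_lift_rec (t : tm) k n m : lift_rec k n (lift_rec k m t) = lift_rec k (n + m) t.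
Proof. apply simpl_lift_rec; lia. Qed.

Lemma permute_lift_rec (t : tm) k i p n : k <= i ->
  lift_rec k p (lift_rec i n t) = lift_rec (p + i) n (lift_rec k p t).
Proof.
  revert k i p n; induction t; intros; simpl; try (f_equal; auto; fail).
  - case_nat_tests; simpl; case_nat_tests; f_equal; lia.
  - f_equal; auto. rewrite IHt2 by lia. f_equal; lia.
  - f_equal; auto. rewrite IHt2 by lia. f_equal; lia.
Qed.

Lemma simpl_subst_rec (t : tm) N n p k : k <= p -> p <= n + k ->
  subst_rec N p (lift_rec k (S n) t) = lift_rec k n t.
Proof.
  revert N n p k; induction t; intros; simpl; try (f_equal; auto; fail).
  - case_nat_tests; simpl; case_nat_tests; f_equal; lia.
  - f_equal; auto. apply IHt2; lia.
  - f_equal; auto. apply IHt2; lia.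
Qed.

Lemma subst_lift_cancel (t N : tm) k : subst_rec N k (lift_rec k 1 t) = t.
Proof. rewrite simpl_subst_rec by lia. apply lift_rec0. Qed.

Lemma commut_lift_subst_rec (t : tm) N k p n : k <= p ->
  lift_rec k n (subst_rec N p t) = subst_rec N (n + p) (lift_rec k n t).
Proof.
  revert N k p n; induction t; intros; simpl; try (f_equal; auto; fail).
  - case_nat_tests; simpl; case_nat_tests; try (f_equal; lia).
    unfold lift. rewrite simpl_lift_rec by lia. f_equal; lia.
  - f_equal; auto. rewrite IHt2 by lia. f_equal; lia.
  - f_equal; auto. rewrite IHt2 by lia. f_equal; lia.
Qed.

Lemma commut_lift_subst_rec2 (t : tm) N k p n :
  lift_rec (p + k) n (subst_rec N p t)
  = subst_rec (lift_rec k n N) p (lift_rec (S (p + k)) n t).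
Proof.
  revert N k p n; induction t; intros; simpl; try (f_equal; auto; fail).
  - case_nat_tests; simpl; case_nat_tests; try (f_equal; lia).
    subst. unfold lift. rewrite (permute_lift_rec _ 0 k p) by lia. f_equal; lia.
  - f_equal; auto. exact (IHt2 N k (S p) n).
  - f_equal; auto. exact (IHt2 N k (S p) n).
Qed.

Lemma distr_subst_rec (t : tm) N P n p :
  subst_rec P (p + n) (subst_rec N p t)
  = subst_rec (subst_rec P n N) p (subst_rec P (S (p + n)) t).
Proof.
  revert N P n p; induction t; intros; simpl; try (f_equal; auto; fail).
  - case_nat_tests; simpl; case_nat_tests; try (f_equal; lia); subst; unfold lift.
    + rewrite (commut_lift_subst_rec _ _ 0) by lia. reflexivity.
    + rewrite simpl_subst_rec by lia. reflexivity.
  - f_equal; auto. exact (IHt2 N P n (S p)).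
  - f_equal; auto. exact (IHt2 N P n (S p)).
Qed.

End DeBruijn.

Section Conversion.
Context {K : Type}.
Variable hd : term K -> term K -> Prop.
Notation step := (step K hd).
Notation conv := (conv K hd).

Lemma conv_refl x : conv x x. Proof. apply rst_refl. Qed.
Lemma conv_sym x y : conv x y -> conv y x. Proof. apply rst_sym. Qed.
Lemma conv_trans x y z : conv x y -> conv y z -> conv x z. Proof. apply rst_trans. Qed.
Lemma conv_step x y : step x y -> conv x y. Proof. apply rst_step. Qed.

Lemma conv_map (f : term K -> term K) :
  (forall x y, step x y -> step (f x) (f y)) -> forall x y, conv x y -> conv (f x) (f y).
Proof.
  intros Hf x y H; induction H.
  - apply conv_step; auto.
  - apply conv_refl.
  - apply conv_sym; auto.
  - eapply conv_trans; eauto.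
Qed.

Lemma conv_app u u' v v' : conv u u' -> conv v v' -> conv (App u v) (App u' v').
Proof.
  intros Hu Hv; apply conv_trans with (App u' v).
  - apply (conv_map (fun x => App x v)); auto using st_appl.
  - apply (conv_map (fun x => App u' x)); auto using st_appr.
Qed.

Lemma conv_lam u u' v v' : conv u u' -> conv v v' -> conv (Lam u v) (Lam u' v').
Proof.
  intros Hu Hv; apply conv_trans with (Lam u' v).
  - apply (conv_map (fun x => Lam x v)); auto using st_laml.
  - apply (conv_map (fun x => Lam u' x)); auto using st_lamr.
Qed.

Lemma conv_pi u u' v v' : conv u u' -> conv v v' -> conv (Pi u v) (Pi u' v').
Proof.
  intros Hu Hv; apply conv_trans with (Pi u' v).
  - apply (conv_map (fun x => Pi x v)); auto using st_pil.
  - apply (conv_map (fun x => Pi u' x)); auto using st_pir.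
Qed.

Hypothesis hd_lift : forall t u k n, hd t u -> hd (lift_rec k n t) (lift_rec k n u).
Hypothesis hd_subst : forall t u N k, hd t u -> hd (subst_rec N k t) (subst_rec N k u).

Lemma step_lift t u : step t u -> forall k n, step (lift_rec k n t) (lift_rec k n u).
Proof.
  induction 1; intros; simpl; try (constructor; auto; fail).
  unfold subst. rewrite (commut_lift_subst_rec2 _ _ k 0). apply st_beta.
Qed.

Lemma step_subst t u : step t u -> forall N k, step (subst_rec N k t) (subst_rec N k u).
Proof.
  induction 1; intros; simpl; try (constructor; auto; fail).
  unfold subst. rewrite (distr_subst_rec _ _ _ k 0). apply st_beta.
Qed.

Lemma conv_lift t u k n : conv t u -> conv (lift_rec k n t) (lift_rec k n u).
Proof. apply (conv_map (lift_rec k n)). intros; apply step_lift; auto. Qed.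

Lemma conv_subst_l t u N k : conv t u -> conv (subst_rec N k t) (subst_rec N k u).
Proof. apply (conv_map (subst_rec N k)). intros; apply step_subst; auto. Qed.

Lemma conv_subst_r t N N' k : conv N N' -> conv (subst_rec N k t) (subst_rec N' k t).
Proof.
  intro H; revert k; induction t as [c|i|u IHu v IHv|u IHu v IHv|u IHu v IHv]; intro k; simpl;
    auto using conv_refl, conv_app, conv_lam, conv_pi.
  destruct (Nat.compare i k); auto using conv_refl.
  apply conv_lift; auto.
Qed.

Lemma conv_subst t t' N N' k : conv t t' -> conv N N' ->
  conv (subst_rec N k t) (subst_rec N' k t').
Proof. intros; eapply conv_trans; [apply conv_subst_l | apply conv_subst_r]; eauto. Qed.

End Conversion.

Scheme typ_mind := Minimality for typ Sort Prop
  with wf_mind := Minimality for wf Sort Prop.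

Inductive ins_in_env {K : Type} (A : term K) : nat -> list (term K) -> list (term K) -> Prop :=
| ins_O e : ins_in_env A 0 e (A :: e)
| ins_S n e f t : ins_in_env A n e f -> ins_in_env A (S n) (t :: e) (lift_rec n 1 t :: f).

Inductive sub_in_env {K : Type} (g : list (term K)) (N T : term K) :
  nat -> list (term K) -> list (term K) -> Prop :=
| sub_O : sub_in_env g N T 0 (T :: g) g
| sub_S e f n u : sub_in_env g N T n e f ->
    sub_in_env g N T (S n) (u :: e) (subst_rec N n u :: f).

Section EnvOps.
Context {K : Type}.
Notation tm := (term K).

Lemma ins_nth_lt (A : tm) k e f : ins_in_env A k e f -> forall n B, n < k ->
  nth_error e n = Some B -> nth_error f n = Some (lift_rec (k - S n) 1 B).
Proof.
  induction 1; intros [|n'] B Hn E; simpl in *; try lia.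
  - injection E; intros; subst. do 2 f_equal. lia.
  - apply IHins_in_env; auto. lia.
Qed.

Lemma ins_nth_ge (A : tm) k e f : ins_in_env A k e f -> forall n B, k <= n ->
  nth_error e n = Some B -> nth_error f (S n) = Some B.
Proof.
  induction 1; intros [|n'] B Hn E; simpl in *; auto; try lia.
  apply IHins_in_env; auto. lia.
Qed.

Lemma sub_nth_lt g (N T : tm) n e f : sub_in_env g N T n e f -> forall i B, i < n ->
  nth_error e i = Some B -> nth_error f i = Some (subst_rec N (n - S i) B).
Proof.
  induction 1; intros [|i] B Hi E; simpl in *; try lia.
  - injection E; intros; subst. do 2 f_equal. lia.
  - apply IHsub_in_env; auto. lia.
Qed.

Lemma sub_nth_eq g (N T : tm) n e f : sub_in_env g N T n e f -> nth_error e n = Some T.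
Proof. induction 1; simpl; auto. Qed.

Lemma sub_nth_gt g (N T : tm) n e f : sub_in_env g N T n e f -> forall i B, n < i ->
  nth_error e i = Some B -> nth_error f (pred i) = Some B.
Proof.
  induction 1; intros [|[|i]] B Hi E; simpl in *; auto; try lia.
  apply (IHsub_in_env (S i)); auto. lia.
Qed.

Lemma sub_in_env_app g (N T : tm) n e f : sub_in_env g N T n e f ->
  exists D, f = D ++ g /\ length D = n.
Proof.
  induction 1 as [|e f n u _ (D & -> & <-)].
  - exists []; auto.
  - exists (subst_rec N (length D) u :: D); auto.
Qed.

End EnvOps.

Section Metatheory.
Context {K : Type}.
Variables (IsSort : K -> Prop) (Ax : K -> K -> Prop) (Rl : K -> K -> K -> Prop)
  (Sig : K -> term K -> Prop) (hd : term K -> term K -> Prop).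
Notation typ := (typ K IsSort Ax Rl Sig hd).
Notation wf := (wf K IsSort Ax Rl Sig hd).
Notation conv := (conv K hd).

Lemma typ_wf G M T : typ G M T -> wf G.
Proof. induction 1; auto. Qed.

Lemma typ_cst_inv G c T : typ G (Cst c) T ->
  (exists s, Ax c s /\ conv (Cst s) T) \/ (exists T0, Sig c T0 /\ conv T0 T).
Proof.
  intro H; remember (Cst c) as P; revert c HeqP.
  induction H; intros; try discriminate.
  - injection HeqP; intros; subst. left; eauto using conv_refl.
  - injection HeqP; intros; subst. right; eauto using conv_refl.
  - destruct (IHtyp1 _ HeqP) as [(s' & ? & ?)|(T0 & ? & ?)];
      [left | right]; eauto using conv_trans.
Qed.

Lemma typ_pi_inv G A B T : typ G (Pi A B) T -> exists s1 s2 s3, Rl s1 s2 s3 /\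
  typ G A (Cst s1) /\ typ (A :: G) B (Cst s2) /\ conv (Cst s3) T.
Proof.
  intro H; remember (Pi A B) as P; revert A B HeqP.
  induction H; intros; try discriminate.
  - injection HeqP; intros; subst. exists s1, s2, s3. eauto 6 using conv_refl.
  - destruct (IHtyp1 _ _ HeqP) as (s1 & s2 & s3 & ? & ? & ? & ?).
    exists s1, s2, s3. eauto 6 using conv_trans.
Qed.

Lemma typ_lam_inv G A M T : typ G (Lam A M) T ->
  exists B s, typ (A :: G) M B /\ typ G (Pi A B) (Cst s) /\ conv (Pi A B) T.
Proof.
  intro H; remember (Lam A M) as P; revert A M HeqP.
  induction H; intros; try discriminate.
  - injection HeqP; intros; subst. eauto 6 using conv_refl.
  - destruct (IHtyp1 _ _ HeqP) as (B0 & s0 & ? & ? & ?). eauto 6 using conv_trans.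
Qed.

Lemma typ_app_inv G u v T : typ G (App u v) T ->
  exists A B, typ G u (Pi A B) /\ typ G v A /\ conv (subst v B) T.
Proof.
  intro H; remember (App u v) as P; revert u v HeqP.
  induction H; intros; try discriminate.
  - injection HeqP; intros; subst. eauto 6 using conv_refl.
  - destruct (IHtyp1 _ _ HeqP) as (A0 & B0 & ? & ? & ?). eauto 6 using conv_trans.
Qed.

Hypothesis hd_lift : forall t u k n, hd t u -> hd (lift_rec k n t) (lift_rec k n u).
Hypothesis hd_subst : forall t u N k, hd t u -> hd (subst_rec N k t) (subst_rec N k u).
Hypothesis sig_lift : forall c T k n, Sig c T -> lift_rec k n T = T.
Hypothesis sig_subst : forall c T N k, Sig c T -> subst_rec N k T = T.
Hypothesis rl_sort : forall s1 s2 s3, Rl s1 s2 s3 -> IsSort s1.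

Lemma weakening_gen G M T : typ G M T -> forall A k G', ins_in_env A k G G' -> wf G' ->
  typ G' (lift_rec k 1 M) (lift_rec k 1 T).
Proof.
  revert G M T.
  apply (typ_mind K IsSort Ax Rl Sig hd
    (fun G M T => forall A k G', ins_in_env A k G G' -> wf G' ->
       typ G' (lift_rec k 1 M) (lift_rec k 1 T))
    (fun _ => True)); intros; simpl; auto.
  - apply t_sort; auto.
  - rewrite (sig_lift _ _ k 1 H1). apply t_sig; auto.
  - unfold lift. destruct (Nat.leb_spec k n).
    + rewrite simpl_lift_rec by lia. replace (1 + S n) with (S (n + 1)) by lia.
      apply t_var; auto. rewrite Nat.add_1_r. eapply ins_nth_ge; eauto.
    + replace k with (S n + (k - S n)) at 1 by lia.
      rewrite <- permute_lift_rec by lia.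
      apply t_var; auto. eapply ins_nth_lt; eauto.
  - assert (HA : typ G' (lift_rec k 1 A) (Cst s1)) by (apply (H1 A0); auto).
    eapply t_pi; eauto. apply (H3 A0); [constructor; auto | eapply wf_cons; eauto].
  - assert (HP : typ G' (Pi (lift_rec k 1 A) (lift_rec (S k) 1 B)) (Cst s)) by (apply (H3 A0); auto).
    destruct (typ_pi_inv _ _ _ _ HP) as (s1 & s2 & s3 & Hr & HA & _).
    eapply t_lam; [exact H | apply (H1 A0) | exact HP];
      [constructor; auto | eapply wf_cons with (s := s1); eauto].
  - unfold subst. rewrite (commut_lift_subst_rec2 _ _ k 0).
    eapply t_app; [apply (H0 A0) | apply (H2 A0)]; eauto.
  - eapply t_conv; [eauto | exact H1 | apply (H3 A0); auto | apply conv_lift; auto].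
Qed.

Lemma weakening G M T A : typ G M T -> wf (A :: G) -> typ (A :: G) (lift 1 M) (lift 1 T).
Proof. intros; eapply weakening_gen; eauto using ins_O. Qed.

Lemma thinning D G M T : typ G M T -> wf (D ++ G) ->
  typ (D ++ G) (lift (length D) M) (lift (length D) T).
Proof.
  induction D as [|B D IHD]; intros HT HW; simpl.
  - rewrite !lift0. auto.
  - assert (HW' : wf (D ++ G)) by (inversion HW; eapply typ_wf; eauto).
    pose proof (weakening _ _ _ _ (IHD HT HW') HW) as H.
    unfold lift in *. rewrite !lift_lift_rec in H. auto.
Qed.

Lemma substitution_gen e M A : typ e M A -> forall g N T n f, typ g N T ->
  sub_in_env g N T n e f -> typ f (subst_rec N n M) (subst_rec N n A).
Proof.
  revert e M A.
  apply (typ_mind K IsSort Ax Rl Sig hd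
    (fun e M A => forall g N T n f, typ g N T -> sub_in_env g N T n e f ->
       typ f (subst_rec N n M) (subst_rec N n A))
    (fun e => forall g N T n f, typ g N T -> sub_in_env g N T n e f -> wf f)); intros; simpl.
  - apply t_sort; eauto.
  - rewrite (sig_subst _ _ N n H1). apply t_sig; eauto.
  - assert (Hwf : wf f) by eauto. unfold lift.
    destruct (Nat.compare_spec n n0).
    + subst. rewrite (sub_nth_eq _ _ _ _ _ _ H3) in H1. injection H1; intros; subst.
      rewrite simpl_subst_rec by lia.
      destruct (sub_in_env_app _ _ _ _ _ _ H3) as (D & -> & <-). apply thinning; auto.
    + replace n0 with (S n + (n0 - S n)) by lia.
      rewrite <- commut_lift_subst_rec by lia.
      apply t_var; auto. eapply sub_nth_lt; eauto.
    + rewrite simpl_subst_rec by lia.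
      replace n with (S (pred n)) at 2 by lia. apply t_var; auto. eapply sub_nth_gt; eauto.
  - eapply t_pi; [exact H | eapply H1; eauto | eapply H3; [eauto | constructor; eauto]].
  - eapply t_lam; [exact H | eapply H1; [exact H4 | constructor; exact H5] | exact (H3 _ _ _ _ _ H4 H5)].
  - unfold subst. rewrite (distr_subst_rec _ _ _ n 0).
    eapply t_app; [exact (H0 _ _ _ _ _ H3 H4) | eauto].
  - eapply t_conv; [eauto | exact H1 | exact (H3 _ _ _ _ _ H5 H6) | apply conv_subst_l; auto].
  - inversion H0.
  - match goal with Hs : sub_in_env _ _ _ _ (_ :: _) _ |- _ => inversion Hs; subst end.
    + eapply typ_wf; eassumption.
    + eapply wf_cons; [eassumption | eapply H1; eassumption].
Qed.

Lemma substitution G A M B N : typ (A :: G) M B -> typ G N A -> typ G (subst N M) (subst N B).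
Proof. intros; eapply substitution_gen; eauto using sub_O. Qed.

End Metatheory.

Section Confluence.
Context {Srt : Type}.
Variables (Ax : Srt -> Srt -> Prop) (Rl : Srt -> Srt -> Srt -> Prop).
Notation tm := (term (LPC Srt)).
Notation hd := (LP_hd Ax Rl).
Notation step := (step (LPC Srt) hd).
Notation conv := (conv (LPC Srt) hd).

Notation red := (clos_refl_trans tm step).

Lemma lift_rec_lift1 (B : tm) k n : lift_rec (S k) n (lift 1 B) = lift 1 (lift_rec k n B).
Proof. unfold lift. rewrite (permute_lift_rec B 0 k 1 n) by lia. reflexivity. Qed.

Lemma subst_rec_lift1 (B N : tm) k : subst_rec N (S k) (lift 1 B) = lift 1 (subst_rec N k B).
Proof. unfold lift. rewrite (commut_lift_subst_rec B N 0 k 1) by lia. reflexivity. Qed.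

Lemma LP_hd_lift t u k n : hd t u -> hd (lift_rec k n t) (lift_rec k n u).
Proof.
  destruct 1; simpl; [constructor; auto|].
  rewrite lift_rec_lift1. constructor; auto.
Qed.

Lemma LP_hd_subst t u N k : hd t u -> hd (subst_rec N k t) (subst_rec N k u).
Proof.
  destruct 1; simpl; [constructor; auto|].
  rewrite subst_rec_lift1. constructor; auto.
Qed.

Lemma LP_conv_subst t t' N N' k : conv t t' -> conv N N' ->
  conv (subst_rec N k t) (subst_rec N' k t').
Proof. apply conv_subst; auto using LP_hd_lift, LP_hd_subst. Qed.

Inductive par : tm -> tm -> Prop :=
| par_var n : par (Var n) (Var n)
| par_cst c : par (Cst c) (Cst c)
| par_app u u' v v' : par u u' -> par v v' -> par (App u v) (App u' v')
| par_lam u u' v v' : par u u' -> par v v' -> par (Lam u v) (Lam u' v')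
| par_pi u u' v v' : par u u' -> par v v' -> par (Pi u v) (Pi u' v')
| par_beta A M M' N N' : par M M' -> par N N' -> par (App (Lam A M) N) (subst N' M')
| par_ax s1 s2 : Ax s1 s2 -> par (App (Cst (cEps s2)) (Cst (cDot s1))) (Cst (cU s1))
| par_rl s1 s2 s3 A A' B B' : Rl s1 s2 s3 -> par A A' -> par B B' ->
    par (App (Cst (cEps s3)) (App (App (Cst (cPi s1 s2 s3)) A) B))
        (Pi (App (Cst (cEps s1)) A') (App (Cst (cEps s2)) (App (lift 1 B') (Var 0)))).

Lemma par_refl t : par t t.
Proof. induction t; constructor; auto. Qed.

Lemma step_par t u : step t u -> par t u.
Proof.
  induction 1; auto using par, par_refl.
  destruct H; auto using par, par_refl.
Qed.

Lemma red_app u u' v v' : red u u' -> red v v' -> red (App u v) (App u' v').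
Proof.
  intros Hu Hv; apply rt_trans with (App u' v).
  - induction Hu; eauto using rt_step, rt_refl, rt_trans, st_appl.
  - induction Hv; eauto using rt_step, rt_refl, rt_trans, st_appr.
Qed.

Lemma red_lam u u' v v' : red u u' -> red v v' -> red (Lam u v) (Lam u' v').
Proof.
  intros Hu Hv; apply rt_trans with (Lam u' v).
  - induction Hu; eauto using rt_step, rt_refl, rt_trans, st_laml.
  - induction Hv; eauto using rt_step, rt_refl, rt_trans, st_lamr.
Qed.

Lemma red_pi u u' v v' : red u u' -> red v v' -> red (Pi u v) (Pi u' v').
Proof.
  intros Hu Hv; apply rt_trans with (Pi u' v).
  - induction Hu; eauto using rt_step, rt_refl, rt_trans, st_pil.
  - induction Hv; eauto using rt_step, rt_refl, rt_trans, st_pir.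
Qed.

Lemma par_red t u : par t u -> red t u.
Proof.
  induction 1 as [| | | | |A M M' N N' _ ? _ ?| |];
    auto using rt_refl, red_app, red_lam, red_pi.
  - apply rt_trans with (App (Lam A M') N'); auto using red_app, red_lam, rt_refl.
    apply rt_step, st_beta.
  - apply rt_step, st_head; constructor; auto.
  - eapply rt_trans; [apply red_app; [apply rt_refl | apply red_app; [apply red_app|]]|];
      eauto using rt_refl.
    apply rt_step, st_head; constructor; auto.
Qed.

Lemma par_lift t u : par t u -> forall k n, par (lift_rec k n t) (lift_rec k n u).
Proof.
  induction 1; intros; simpl; try (constructor; auto; fail).
  - destruct (Nat.leb k n); constructor.
  - unfold subst. rewrite (commut_lift_subst_rec2 _ _ k 0). apply par_beta; auto.
  - rewrite lift_rec_lift1. apply par_rl; auto.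
Qed.

Lemma par_subst t u : par t u -> forall N N' k, par N N' ->
  par (subst_rec N k t) (subst_rec N' k u).
Proof.
  induction 1; intros; simpl; try (constructor; auto; fail).
  - destruct (Nat.compare n k); try constructor. apply par_lift; auto.
  - unfold subst. rewrite (distr_subst_rec _ _ _ k 0). apply par_beta; auto.
  - rewrite subst_rec_lift1. apply par_rl; auto.
Qed.

Lemma par_cst_inv c t : par (Cst c) t -> t = Cst c.
Proof. inversion 1; auto. Qed.

Lemma par_lam_inv A M t : par (Lam A M) t ->
  exists A' M', t = Lam A' M' /\ par A A' /\ par M M'.
Proof. inversion 1; eauto. Qed.

Lemma par_pi_code_inv s1 s2 s3 A B t : par (App (App (Cst (cPi s1 s2 s3)) A) B) t ->
  exists A' B', t = App (App (Cst (cPi s1 s2 s3)) A') B' /\ par A A' /\ par B B'.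
Proof.
  inversion 1; subst.
  match goal with Hp : par (App (Cst _) A) _ |- _ => inversion Hp; subst end.
  match goal with Hp : par (Cst _) _ |- _ => inversion Hp; subst end. eauto.
Qed.

(* Takahashi's complete development; the rewrite rules are contracted only when their
   side condition holds, which is decided classically. *)
Fixpoint rho (t : tm) : tm :=
  match t with
  | App u v =>
    match u with
    | Lam A M => subst (rho v) (rho M)
    | Cst (cEps s2) =>
      match v with
      | Cst (cDot s1) =>
          if excluded_middle_informative (Ax s1 s2) then Cst (cU s1) else App (rho u) (rho v)
      | App (App (Cst (cPi s1 s2' s3)) A) B =>
          if excluded_middle_informative (s3 = s2 /\ Rl s1 s2' s3)
          then Pi (App (Cst (cEps s1)) (rho A))
                  (App (Cst (cEps s2')) (App (lift 1 (rho B)) (Var 0)))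
          else App (rho u) (rho v)
      | _ => App (rho u) (rho v)
      end
    | _ => App (rho u) (rho v)
    end
  | Lam A M => Lam (rho A) (rho M)
  | Pi A B => Pi (rho A) (rho B)
  | _ => t
  end.

Lemma par_rho_eps s v v' : par v v' -> par v' (rho v) ->
  par (App (Cst (cEps s)) v') (rho (App (Cst (cEps s)) v)).
Proof.
  intros Hv IHv.
  destruct v as [c| |v1 v2| |]; try (simpl; constructor; auto using par; fail).
  - destruct c; try (simpl; constructor; auto using par; fail).
    apply par_cst_inv in Hv; subst. simpl.
    destruct (excluded_middle_informative (Ax s0 s)); auto using par.
  - destruct v1 as [| |v11 v12| |]; try (simpl; constructor; auto using par; fail).
    destruct v11 as [c| | | |]; try (simpl; constructor; auto using par; fail).
    destruct c as [| | | | |s1 s2 s3]; try (simpl; constructor; auto using par; fail).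
    simpl. destruct (excluded_middle_informative (s3 = s /\ Rl s1 s2 s3)) as [[-> Hr]|];
      [|constructor; auto using par].
    apply par_pi_code_inv in Hv as (A' & B' & -> & _ & _).
    simpl in IHv. apply par_pi_code_inv in IHv as (A'' & B'' & [= <- <-] & HA & HB).
    apply par_rl; auto.
Qed.

Lemma par_rho t u : par t u -> par u (rho t).
Proof.
  induction 1; try (simpl; auto using par; fail).
  - destruct u as [c| | |A M|]; try (simpl; constructor; auto; fail).
    + destruct c; try (simpl; constructor; auto; fail).
      apply par_cst_inv in H; subst. apply par_rho_eps; auto.
    + apply par_lam_inv in H as (A' & M' & -> & _ & HM).
      simpl in IHpar1 |- *. apply par_lam_inv in IHpar1 as (A'' & M'' & [= <- <-] & _ & HM').
      apply par_beta; auto.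
  - simpl. apply par_subst; auto.
  - simpl. destruct (excluded_middle_informative (Ax s1 s2)); [constructor | contradiction].
  - simpl. destruct (excluded_middle_informative (s3 = s3 /\ Rl s1 s2 s3)) as [_|[]]; auto.
    apply par_pi; apply par_app; auto using par.
    apply par_app; [apply par_lift|]; auto using par.
Qed.

Notation pars := (clos_refl_trans_1n tm par).

Lemma pars_strip t u1 u2 : par t u1 -> pars t u2 -> exists w, pars u1 w /\ par u2 w.
Proof.
  intros H1 H2; revert u1 H1; induction H2 as [|x y z Hxy _ IH]; intros u1 H1.
  - exists u1; split; [constructor | auto].
  - destruct (IH (rho x) (par_rho _ _ Hxy)) as (w & Hw1 & Hw2).
    exists w; split; auto. econstructor; [apply par_rho|]; eauto.
Qed.

Lemma pars_confluent t u1 u2 : pars t u1 -> pars t u2 -> exists w, pars u1 w /\ pars u2 w.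
Proof.
  intros H1; revert u2; induction H1 as [|x y z Hxy _ IH]; intros u2 H2.
  - exists u2; split; [auto | constructor].
  - destruct (pars_strip _ _ _ Hxy H2) as (w & Hw1 & Hw2).
    destruct (IH _ Hw1) as (w' & ? & ?).
    exists w'; split; auto. econstructor; eauto.
Qed.

Lemma red_pars t u : red t u -> pars t u.
Proof.
  induction 1; eauto using clos_refl_trans_1n, step_par.
  eapply clos_rt_rt1n, rt_trans; apply clos_rt1n_rt; eauto.
Qed.

Lemma pars_red t u : pars t u -> red t u.
Proof. induction 1; eauto using rt_refl, rt_trans, par_red. Qed.

Lemma church_rosser x y : conv x y -> exists w, red x w /\ red y w.
Proof.
  induction 1 as [x y H| x | x y _ (w & ? & ?) | x y z _ (w1 & ? & ?) _ (w2 & ? & ?)].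
  - exists y; split; [apply rt_step | apply rt_refl]; auto.
  - exists x; split; apply rt_refl.
  - exists w; auto.
  - destruct (pars_confluent _ _ _ (red_pars _ _ H0) (red_pars _ _ H1)) as (w & ? & ?).
    exists w; split; eapply rt_trans; eauto using pars_red.
Qed.

Lemma red_conv t u : red t u -> conv t u.
Proof. induction 1; eauto using conv_step, conv_refl, conv_trans. Qed.

Lemma red_cst_inv c w : red (Cst c) w -> w = Cst c.
Proof.
  intro H; apply clos_rt_rt1n in H; remember (Cst c) as t.
  induction H; subst; auto. inversion H. inversion H1.
Qed.

Lemma red_pi_inv A B w : red (Pi A B) w ->
  exists A' B', w = Pi A' B' /\ red A A' /\ red B B'.
Proof.
  intro H; apply clos_rt_rt1n in H; remember (Pi A B) as t; revert A B Heqt.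
  induction H as [|x y z Hxy _ IH]; intros; subst.
  - exists A, B; auto using rt_refl.
  - inversion Hxy; subst; [inversion H| |];
      destruct (IH _ _ eq_refl) as (A'' & B'' & -> & ? & ?);
      exists A'', B''; split; auto; split; eauto using rt_trans, rt_step, rt_refl.
Qed.

Lemma conv_pi_inj A B A' B' : conv (Pi A B) (Pi A' B') -> conv A A' /\ conv B B'.
Proof.
  intro H; destruct (church_rosser _ _ H) as (w & H1 & H2).
  destruct (red_pi_inv _ _ _ H1) as (a & b & -> & ? & ?).
  destruct (red_pi_inv _ _ _ H2) as (a' & b' & [= <- <-] & ? & ?).
  split; eapply conv_trans; eauto using red_conv, conv_sym.
Qed.

Lemma conv_cst_inj c c' : conv (Cst c) (Cst c') -> c = c'.
Proof.
  intro H; destruct (church_rosser _ _ H) as (w & H1 & H2).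
  apply red_cst_inv in H1; apply red_cst_inv in H2; congruence.
Qed.

Lemma cst_pi_not_conv c A B : ~ conv (Cst c) (Pi A B).
Proof.
  intro H; destruct (church_rosser _ _ H) as (w & H1 & H2).
  apply red_cst_inv in H1; subst.
  destruct (red_pi_inv _ _ _ H2) as (? & ? & ? & _); discriminate.
Qed.

End Confluence.

(* Objects, type families and kinds; [Kind] itself has no level. *)
Inductive level := LObj | LFam | LKind.

Section Levels.
Context {Srt : Type}.
Variables (Ax : Srt -> Srt -> Prop) (Rl : Srt -> Srt -> Srt -> Prop).
Notation tm := (term (LPC Srt)).
Notation step := (step (LPC Srt) (LP_hd Ax Rl)).
Notation red := (clos_refl_trans tm step).
Notation conv := (conv (LPC Srt) (LP_hd Ax Rl)).
Notation typ := (typLP Ax Rl).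

Fixpoint lvl (t : tm) : option level :=
  match t with
  | Cst c => match c with
             | cType => Some LKind | cKind => None
             | cU _ | cEps _ => Some LFam
             | cDot _ | cPi _ _ _ => Some LObj end
  | Var _ => Some LObj
  | App u v => match lvl u, lvl v with
               | Some LObj, Some LObj => Some LObj
               | Some LFam, Some LObj => Some LFam
               | _, _ => None end
  | Lam A M => match lvl A, lvl M with
               | Some LFam, Some LObj => Some LObj
               | Some LFam, Some LFam => Some LFam
               | _, _ => None end
  | Pi A B => match lvl A, lvl B with
              | Some LFam, Some LFam => Some LFam
              | Some LFam, Some LKind => Some LKind
              | _, _ => None end
  end.

Lemma lvl_app_inv u v l : lvl (App u v) = Some l ->
  lvl v = Some LObj /\
  (l = LObj /\ lvl u = Some LObj \/ l = LFam /\ lvl u = Some LFam).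
Proof.
  simpl; destruct (lvl u) as [[]|], (lvl v) as [[]|]; intro E; try discriminate;
    injection E as <-; auto.
Qed.

Lemma lvl_lam_inv A M l : lvl (Lam A M) = Some l ->
  lvl A = Some LFam /\
  (l = LObj /\ lvl M = Some LObj \/ l = LFam /\ lvl M = Some LFam).
Proof.
  simpl; destruct (lvl A) as [[]|], (lvl M) as [[]|]; intro E; try discriminate;
    injection E as <-; auto.
Qed.

Lemma lvl_pi_inv A B l : lvl (Pi A B) = Some l ->
  lvl A = Some LFam /\
  (l = LFam /\ lvl B = Some LFam \/ l = LKind /\ lvl B = Some LKind).
Proof.
  simpl; destruct (lvl A) as [[]|], (lvl B) as [[]|]; intro E; try discriminate;
    injection E as <-; auto.
Qed.

Lemma lvl_lift t k n : lvl (lift_rec k n t) = lvl t.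
Proof.
  revert k; induction t as [c|i|u IHu v IHv|u IHu v IHv|u IHu v IHv]; intro k; simpl;
    rewrite ?IHu, ?IHv; auto.
  destruct (Nat.leb k i); auto.
Qed.

Lemma lvl_subst t N k : lvl N = Some LObj -> lvl (subst_rec N k t) = lvl t.
Proof.
  intro HN; revert k; induction t as [c|i|u IHu v IHv|u IHu v IHv|u IHu v IHv]; intro k;
    simpl; rewrite ?IHu, ?IHv; auto.
  destruct (Nat.compare i k); auto. unfold lift; rewrite lvl_lift; auto.
Qed.

Lemma lvl_step t u : step t u -> forall l, lvl t = Some l -> lvl u = Some l.
Proof.
  induction 1; intros l Hl.
  - apply lvl_app_inv in Hl as (HN & [(-> & HL)|(-> & HL)]);
      apply lvl_lam_inv in HL as (_ & [(E & HM)|(E & HM)]); try discriminate;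
      unfold subst; rewrite lvl_subst; auto.
  - destruct H; simpl in *; auto. unfold lift; rewrite lvl_lift.
    destruct (lvl A) as [[]|], (lvl B) as [[]|]; try discriminate; auto.
  - simpl in *. destruct (lvl u) eqn:E; try discriminate. rewrite (IHstep _ eq_refl). auto.
  - simpl in *. destruct (lvl v) eqn:E, (lvl u) as [[]|]; try discriminate.
    all: rewrite (IHstep _ eq_refl); auto.
  - simpl in *. destruct (lvl A) eqn:E; try discriminate. rewrite (IHstep _ eq_refl). auto.
  - simpl in *. destruct (lvl M) eqn:E, (lvl A) as [[]|]; try discriminate.
    all: rewrite (IHstep _ eq_refl); auto.
  - simpl in *. destruct (lvl A) eqn:E; try discriminate. rewrite (IHstep _ eq_refl). auto.
  - simpl in *. destruct (lvl B) eqn:E, (lvl A) as [[]|]; try discriminate.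
    all: rewrite (IHstep _ eq_refl); auto.
Qed.

Lemma lvl_red t u : red t u -> forall l, lvl t = Some l -> lvl u = Some l.
Proof. induction 1; eauto using lvl_step. Qed.

Lemma lvl_conv t u l1 l2 : conv t u -> lvl t = Some l1 -> lvl u = Some l2 -> l1 = l2.
Proof.
  intros H H1 H2; destruct (church_rosser _ _ _ _ H) as (w & Hw1 & Hw2).
  apply (lvl_red _ _ Hw1) in H1; apply (lvl_red _ _ Hw2) in H2. congruence.
Qed.

Lemma kind_conv_no_lvl u l : conv (Cst cKind) u -> lvl u <> Some l.
Proof.
  intros H Hu; destruct (church_rosser _ _ _ _ H) as (w & Hw1 & Hw2).
  apply red_cst_inv in Hw1; subst. apply (lvl_red _ _ Hw2) in Hu. discriminate.
Qed.

Definition fam_ctx (G : list tm) : Prop :=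
  forall n A, nth_error G n = Some A -> lvl A = Some LFam.

Lemma fam_ctx_cons A G : lvl A = Some LFam -> fam_ctx G -> fam_ctx (A :: G).
Proof. intros HA HG [|n] B E; simpl in E; [injection E as <-|]; eauto. Qed.

Lemma fam_ctx_tail A G : fam_ctx (A :: G) -> fam_ctx G.
Proof. intros HG n; apply (HG (S n)). Qed.

Lemma fam_ctx_skipn G k : fam_ctx G -> fam_ctx (skipn k G).
Proof.
  revert G; induction k; intros [|A G] HG; simpl; eauto using fam_ctx_tail.
Qed.

Inductive leveled (M T : tm) : Prop :=
| lv_obj : lvl M = Some LObj -> lvl T = Some LFam -> leveled M T
| lv_fam : lvl M = Some LFam -> lvl T = Some LKind -> leveled M T
| lv_kind : lvl M = Some LKind -> T = Cst cKind -> leveled M T.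

Lemma leveled_type M : leveled M (Cst cType) -> lvl M = Some LFam.
Proof. destruct 1; simpl in *; congruence. Qed.

Lemma leveled_kind M : leveled M (Cst cKind) -> lvl M = Some LKind.
Proof. destruct 1; simpl in *; congruence. Qed.

Lemma leveled_sort_type M s : LP_isSort s -> leveled M (Cst s) -> lvl M = Some LFam ->
  s = cType.
Proof. intros [-> | ->] H HM; auto. apply leveled_kind in H; congruence. Qed.

Lemma leveled_pi A B s1 s2 s3 : LP_rl s1 s2 s3 -> leveled A (Cst s1) ->
  (lvl A = Some LFam -> leveled B (Cst s2)) -> leveled (Pi A B) (Cst s3).
Proof.
  intros [(-> & -> & ->)|(-> & -> & ->)] HA HB; apply leveled_type in HA;
    specialize (HB HA); [apply leveled_type in HB | apply leveled_kind in HB].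
  - apply lv_fam; simpl; rewrite ?HA, ?HB; auto.
  - apply lv_kind; simpl; rewrite ?HA, ?HB; auto.
Qed.

Lemma leveled_lam A M B s : leveled (Pi A B) (Cst s) ->
  (lvl A = Some LFam -> leveled M B) -> leveled (Lam A M) (Pi A B).
Proof.
  intros HP HM.
  assert (HPi : exists l, lvl (Pi A B) = Some l) by (destruct HP; eauto).
  destruct HPi as (l & (HA & HB)%lvl_pi_inv).
  destruct (HM HA) as [HM' HB'|HM' HB'|HM' ->];
    destruct HB as [(-> & HB)|(-> & HB)]; simpl in HB; try congruence.
  - apply lv_obj; simpl; rewrite ?HA, ?HM', ?HB; auto.
  - apply lv_fam; simpl; rewrite ?HA, ?HM', ?HB; auto.
Qed.

Lemma leveled_app M N A B : leveled M (Pi A B) -> leveled N A ->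
  leveled (App M N) (subst N B).
Proof.
  intros HM HN; destruct HM as [HM HP|HM HP|]; [| |discriminate];
    apply lvl_pi_inv in HP as (HA & [(E & HB)|(E & HB)]); try discriminate;
    destruct HN as [HN _|HN HA'|HN ->]; simpl in *; try congruence;
    unfold subst; [apply lv_obj | apply lv_fam]; simpl; rewrite ?HM, ?HN, ?lvl_subst; auto.
Qed.

Lemma leveled_conv M A B s : leveled M A -> LP_isSort s -> leveled B (Cst s) -> conv A B ->
  leveled M B.
Proof.
  intros HM Hs HB HAB.
  assert (LB : lvl B = Some LFam \/ lvl B = Some LKind)
    by (destruct Hs as [-> | ->]; [left; apply leveled_type | right; apply leveled_kind]; auto).
  destruct HM as [HM HA|HM HA|HM ->].
  - destruct LB as [LB|LB]; [now apply lv_obj|].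
    discriminate (lvl_conv _ _ _ _ HAB HA LB).
  - destruct LB as [LB|LB]; [|now apply lv_fam].
    discriminate (lvl_conv _ _ _ _ HAB HA LB).
  - destruct LB as [LB|LB]; destruct (kind_conv_no_lvl _ _ HAB LB).
Qed.

Lemma typ_leveled G M T : typ G M T -> fam_ctx G -> leveled M T.
Proof.
  induction 1 as [G s1 s2 _ [-> ->]|G c T _ Hc|G n A _ Hn| | | |]; intro HG.
  - now apply lv_kind.
  - destruct c; simpl in Hc; try contradiction.
    + subst; now apply lv_fam.
    + subst; now apply lv_fam.
    + destruct Hc as (? & _ & ->); now apply lv_obj.
    + destruct Hc as (_ & ->); now apply lv_obj.
  - apply lv_obj; auto. unfold lift; rewrite lvl_lift; eauto.
  - eapply leveled_pi; eauto using fam_ctx_cons.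
  - eapply leveled_lam; eauto using fam_ctx_cons.
  - eapply leveled_app; eauto.
  - eapply leveled_conv; eauto.
Qed.

End Levels.

Section Translation.
Context {Srt : Type}.
Variables (Ax : Srt -> Srt -> Prop) (Rl : Srt -> Srt -> Srt -> Prop).
Notation tm := (term (LPC Srt)).
Notation tmS := (term (option Srt)).
Notation step := (step (LPC Srt) (LP_hd Ax Rl)).
Notation conv := (conv (LPC Srt) (LP_hd Ax Rl)).
Notation convS := (Defs.conv (option Srt) (fun _ _ : tmS => False)).

Definition pi_code (s1 s2 : Srt) : tmS :=
  Lam (Cst (Some s1)) (Lam (Pi (Var 0) (Cst (Some s2))) (Pi (Var 1) (App (Var 1) (Var 0)))).

(* A bare [eps_s] goes to the identity of [s], so that [tr (App u v)] is always convertible to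
   [App (tr u) (tr v)]. *)
Fixpoint tr (t : tm) : tmS :=
  match t with
  | Cst c => match c with
             | cType | cKind => Cst None
             | cU s | cDot s => Cst (Some s)
             | cEps s => Lam (Cst (Some s)) (Var 0)
             | cPi s1 s2 _ => pi_code s1 s2 end
  | Var n => Var n
  | App u v => match u with
               | Cst (cEps _) => tr v
               | _ => App (tr u) (tr v) end
  | Lam A M => Lam (tr A) (tr M)
  | Pi A B => Pi (tr A) (tr B)
  end.

Definition is_eps (t : tm) : bool := match t with Cst (cEps _) => true | _ => false end.

Lemma tr_app_not_eps u v : is_eps u = false -> tr (App u v) = App (tr u) (tr v).
Proof. destruct u as [[]| | | |]; simpl; easy. Qed.

Lemma is_eps_lift u k n : is_eps (lift_rec k n u) = is_eps u.
Proof. destruct u as [c|i| | |]; simpl; auto. destruct (Nat.leb k i); auto. Qed.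

Lemma is_eps_subst u N k : is_eps N = false -> is_eps (subst_rec N k u) = is_eps u.
Proof.
  destruct u as [c|i| | |]; simpl; auto.
  destruct (Nat.compare i k); auto. unfold lift; rewrite is_eps_lift; auto.
Qed.

Lemma tr_lift t k n : tr (lift_rec k n t) = lift_rec k n (tr t).
Proof.
  revert k; induction t as [c|i|u IHu v IHv|u IHu v IHv|u IHu v IHv]; intro k.
  - destruct c; reflexivity.
  - simpl. destruct (Nat.leb k i); reflexivity.
  - destruct (is_eps u) eqn:E.
    + destruct u as [[]| | | |]; try discriminate. apply IHv.
    + change (lift_rec k n (App u v)) with (App (lift_rec k n u) (lift_rec k n v)).
      rewrite !tr_app_not_eps, IHu, IHv by (rewrite ?is_eps_lift; auto). reflexivity.
  - simpl. rewrite IHu, IHv; auto.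
  - simpl. rewrite IHu, IHv; auto.
Qed.

Lemma tr_subst t N k : is_eps N = false -> tr (subst_rec N k t) = subst_rec (tr N) k (tr t).
Proof.
  intro HN; revert k; induction t as [c|i|u IHu v IHv|u IHu v IHv|u IHu v IHv]; intro k.
  - destruct c; reflexivity.
  - simpl. destruct (Nat.compare i k); auto. apply tr_lift.
  - destruct (is_eps u) eqn:E.
    + destruct u as [[]| | | |]; try discriminate. apply IHv.
    + change (subst_rec N k (App u v)) with (App (subst_rec N k u) (subst_rec N k v)).
      rewrite !tr_app_not_eps, IHu, IHv by (rewrite ?is_eps_subst; auto). reflexivity.
  - simpl. rewrite IHu, IHv; auto.
  - simpl. rewrite IHu, IHv; auto.
Qed.

Lemma tr_app_conv u v : convS (tr (App u v)) (App (tr u) (tr v)).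
Proof.
  destruct (is_eps u) eqn:E.
  - destruct u as [[]| | | |]; try discriminate.
    apply conv_sym. eapply conv_trans; [apply conv_step, st_beta|].
    unfold subst; simpl. rewrite lift0. apply conv_refl.
  - rewrite tr_app_not_eps; auto using conv_refl.
Qed.

Lemma tr_subst_conv t N k : convS (tr (subst_rec N k t)) (subst_rec (tr N) k (tr t)).
Proof.
  revert k; induction t as [c|i|u IHu v IHv|u IHu v IHv|u IHu v IHv]; intro k.
  - destruct c; apply conv_refl.
  - simpl. destruct (Nat.compare i k); try apply conv_refl.
    unfold lift; rewrite tr_lift. apply conv_refl.
  - change (subst_rec N k (App u v)) with (App (subst_rec N k u) (subst_rec N k v)).
    eapply conv_trans; [apply tr_app_conv|].
    eapply conv_trans; [apply conv_app; [apply IHu | apply IHv]|].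
    change (App (subst_rec (tr N) k (tr u)) (subst_rec (tr N) k (tr v)))
      with (subst_rec (tr N) k (App (tr u) (tr v))).
    apply conv_subst_l; [contradiction|]. apply conv_sym, tr_app_conv.
  - simpl. apply conv_lam; auto.
  - simpl. apply conv_pi; auto.
Qed.

Lemma pi_code_conv s1 s2 s3 A B :
  convS (tr (App (Cst (cEps s3)) (App (App (Cst (cPi s1 s2 s3)) A) B)))
        (tr (Pi (App (Cst (cEps s1)) A) (App (Cst (cEps s2)) (App (lift 1 B) (Var 0))))).
Proof.
  simpl tr at 1.
  eapply conv_trans; [apply conv_step, st_appl, st_beta|].
  eapply conv_trans; [apply conv_step, st_beta|].
  unfold subst, lift; simpl subst_rec. rewrite subst_lift_cancel.
  change (tr (Pi ?X (App (Cst (cEps s2)) ?Y))) with (Pi (tr X) (tr Y)).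
  apply conv_pi; [apply conv_refl|].
  apply conv_sym. eapply conv_trans; [apply tr_app_conv|].
  rewrite tr_lift. apply conv_refl.
Qed.

Lemma tr_step t u : step t u -> convS (tr t) (tr u).
Proof.
  induction 1 as [A M N|t u []| | | | | |].
  - rewrite tr_app_not_eps by reflexivity.
    eapply conv_trans; [apply conv_step, st_beta | apply conv_sym, tr_subst_conv].
  - apply conv_refl.
  - apply pi_code_conv.
  - eapply conv_trans; [apply tr_app_conv|].
    eapply conv_trans; [apply conv_app; [eauto | apply conv_refl]|].
    apply conv_sym, tr_app_conv.
  - eapply conv_trans; [apply tr_app_conv|].
    eapply conv_trans; [apply conv_app; [apply conv_refl | eauto]|].
    apply conv_sym, tr_app_conv.
  - simpl; apply conv_lam; auto using conv_refl.
  - simpl; apply conv_lam; auto using conv_refl.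
  - simpl; apply conv_pi; auto using conv_refl.
  - simpl; apply conv_pi; auto using conv_refl.
Qed.

Lemma tr_conv t u : conv t u -> convS (tr t) (tr u).
Proof. induction 1; eauto using tr_step, conv_refl, conv_sym, conv_trans. Qed.

End Translation.

Section KindNormalisation.
Context {Srt : Type}.
Variables (Ax : Srt -> Srt -> Prop) (Rl : Srt -> Srt -> Srt -> Prop).
Notation tm := (term (LPC Srt)).
Notation conv := (conv (LPC Srt) (LP_hd Ax Rl)).

(* Contracts the application of a type-level abstraction; for well-typed terms these are
   exactly the Kind-level beta-redexes. *)
Definition kapp (X v : tm) : tm :=
  match X with
  | Lam A F => match lvl F with Some LFam => subst v F | _ => App X v end
  | _ => App X v
  end.

Fixpoint knorm (t : tm) : tm :=
  match t with
  | App u v => kapp (knorm u) (knorm v)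
  | Lam A M => Lam (knorm A) (knorm M)
  | Pi A B => Pi (knorm A) (knorm B)
  | _ => t
  end.

Lemma kapp_obj X v : lvl X = Some LObj -> kapp X v = App X v.
Proof.
  destruct X; auto. intros (_ & [(_ & E)|(E & _)])%lvl_lam_inv; [|discriminate].
  simpl; rewrite E; auto.
Qed.

Lemma kapp_lift X v k n : lift_rec k n (kapp X v) = kapp (lift_rec k n X) (lift_rec k n v).
Proof.
  destruct X as [|i| |A F|]; simpl; auto.
  - destruct (Nat.leb k i); auto.
  - rewrite lvl_lift. destruct (lvl F) as [[]|]; simpl; auto.
    unfold subst. apply (commut_lift_subst_rec2 F v k 0 n).
Qed.

Lemma kapp_subst X v N k : lvl N = Some LObj ->
  subst_rec N k (kapp X v) = kapp (subst_rec N k X) (subst_rec N k v).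
Proof.
  intro HN; destruct X as [|i| |A F|]; simpl; auto.
  - destruct (Nat.compare i k); auto. rewrite kapp_obj; auto. unfold lift; rewrite lvl_lift; auto.
  - rewrite lvl_subst by auto. destruct (lvl F) as [[]|]; simpl; auto.
    unfold subst. apply (distr_subst_rec F v N k 0).
Qed.

Lemma kapp_lvl X v l : lvl (App X v) = Some l -> lvl (kapp X v) = Some l.
Proof.
  destruct X as [| | |A F|]; auto.
  intros (Hv & [(-> & HX)|(-> & HX)])%lvl_app_inv;
    apply lvl_lam_inv in HX as (HA & [(E & HF)|(E & HF)]); try discriminate;
    simpl kapp; rewrite HF.
  - simpl; rewrite HA, HF, Hv; auto.
  - unfold subst; rewrite lvl_subst; auto.
Qed.

Lemma kapp_conv X v : conv (kapp X v) (App X v).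
Proof.
  destruct X as [| | |A F|]; try apply conv_refl. simpl.
  destruct (lvl F) as [[]|]; try apply conv_refl. apply conv_sym, conv_step, st_beta.
Qed.

Lemma knorm_lift t k n : knorm (lift_rec k n t) = lift_rec k n (knorm t).
Proof.
  revert k; induction t as [c|i|u IHu v IHv|u IHu v IHv|u IHu v IHv]; intro k; simpl;
    rewrite ?IHu, ?IHv, ?kapp_lift; auto.
  destruct (Nat.leb k i); auto.
Qed.

Lemma knorm_lvl t l : lvl t = Some l -> lvl (knorm t) = Some l.
Proof.
  revert l; induction t as [c|i|u IHu v IHv|u IHu v IHv|u IHu v IHv]; intro l; simpl knorm;
    auto.
  - intros (Hv & [(-> & Hu)|(-> & Hu)])%lvl_app_inv;
      apply kapp_lvl; simpl; rewrite (IHu _ Hu), (IHv _ Hv); auto.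
  - intros (Hu & [(-> & Hv)|(-> & Hv)])%lvl_lam_inv; simpl; rewrite (IHu _ Hu), (IHv _ Hv); auto.
  - intros (Hu & [(-> & Hv)|(-> & Hv)])%lvl_pi_inv; simpl; rewrite (IHu _ Hu), (IHv _ Hv); auto.
Qed.

Lemma knorm_subst t N k : lvl N = Some LObj ->
  knorm (subst_rec N k t) = subst_rec (knorm N) k (knorm t).
Proof.
  intro HN; revert k; induction t as [c|i|u IHu v IHv|u IHu v IHv|u IHu v IHv]; intro k;
    simpl; rewrite ?IHu, ?IHv; auto.
  - destruct (Nat.compare i k); auto. unfold lift. apply knorm_lift.
  - rewrite kapp_subst; auto using knorm_lvl.
Qed.

Lemma knorm_conv t : conv (knorm t) t.
Proof.
  induction t; simpl; auto using conv_refl, conv_lam, conv_pi.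
  eapply conv_trans; [apply kapp_conv | apply conv_app; auto].
Qed.

Lemma conv_knorm A B : conv A B -> conv (knorm A) (knorm B).
Proof. intro H; eapply conv_trans; [apply knorm_conv | eapply conv_trans; eauto using conv_sym, knorm_conv]. Qed.

(* The term grammar of lambda-Pi^-/S, on which [phi] and [psi] are defined. *)
Inductive is_obj : tm -> Prop :=
| obj_var n : is_obj (Var n)
| obj_dot s : is_obj (Cst (cDot s))
| obj_pi s1 s2 s3 : is_obj (Cst (cPi s1 s2 s3))
| obj_app u v : is_obj u -> is_obj v -> is_obj (App u v)
| obj_lam A M : is_type A -> is_obj M -> is_obj (Lam A M)
with is_type : tm -> Prop :=
| type_u s : is_type (Cst (cU s))
| type_eps s M : is_obj M -> is_type (App (Cst (cEps s)) M)
| type_pi A B : is_type A -> is_type B -> is_type (Pi A B).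

Scheme is_obj_mind := Induction for is_obj Sort Prop
  with is_type_mind := Induction for is_type Sort Prop.

Lemma is_obj_type_lvl :
  (forall t, is_obj t -> lvl t = Some LObj) /\ (forall t, is_type t -> lvl t = Some LFam).
Proof.
  split; [apply (is_obj_mind (fun t _ => lvl t = Some LObj) (fun t _ => lvl t = Some LFam))
         |apply (is_type_mind (fun t _ => lvl t = Some LObj) (fun t _ => lvl t = Some LFam))];
    intros; simpl; rewrite ?H, ?H0; auto.
Qed.

Lemma is_obj_type_knorm :
  (forall t, is_obj t -> knorm t = t) /\ (forall t, is_type t -> knorm t = t).
Proof.
  split; [apply (is_obj_mind (fun t _ => knorm t = t) (fun t _ => knorm t = t))
         |apply (is_type_mind (fun t _ => knorm t = t) (fun t _ => knorm t = t))];
    intros; simpl; rewrite ?H, ?H0; auto;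
    apply kapp_obj, is_obj_type_lvl; auto.
Qed.

Lemma is_obj_type_tr :
  (forall t, is_obj t -> phi t = Some (tr t)) /\ (forall t, is_type t -> psi t = Some (tr t)).
Proof.
  split; [apply (is_obj_mind (fun t _ => phi t = Some (tr t)) (fun t _ => psi t = Some (tr t)))
         |apply (is_type_mind (fun t _ => phi t = Some (tr t)) (fun t _ => psi t = Some (tr t)))];
    intros; simpl; rewrite ?H, ?H0; auto;
    destruct u as [[]| | | |]; auto; inversion i.
Qed.

End KindNormalisation.

Section StarTyping.
Context {Srt : Type}.
Variables (Ax : Srt -> Srt -> Prop) (Rl : Srt -> Srt -> Srt -> Prop).
Notation tm := (term (LPC Srt)).
Notation tmS := (term (option Srt)).
Notation conv := (conv (LPC Srt) (LP_hd Ax Rl)).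
Notation tS := (typStar Ax Rl).
Notation wS := (wfStar Ax Rl).

Lemma typS_wf G M T : tS G M T -> wS G.
Proof. apply typ_wf. Qed.

Lemma typS_substitution e M A : tS e M A -> forall g N T n f, tS g N T ->
  sub_in_env g N T n e f -> tS f (subst_rec N n M) (subst_rec N n A).
Proof. apply substitution_gen; simpl; tauto. Qed.

Lemma starRl_total a b : exists c, starRl Rl a b c.
Proof.
  destruct (classic (exists s1 s2 s3, a = Some s1 /\ b = Some s2 /\ Rl s1 s2 s3))
    as [(s1 & s2 & s3 & -> & -> & H)|H].
  - exists (Some s3); simpl; eauto.
  - exists None; simpl; auto.
Qed.

Lemma typS_sort D s : wS D -> exists s', tS D (Cst (Some s)) (Cst s').
Proof.
  intro HD; destruct (classic (exists s', Ax s s')) as [(s' & H)|H].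
  - exists (Some s'); apply t_sort; auto.
  - exists None; apply t_sort; auto.
Qed.

Lemma typS_pi D A B sA sB : tS D A (Cst sA) -> tS (A :: D) B (Cst sB) ->
  exists s, tS D (Pi A B) (Cst s).
Proof. intros HA HB; destruct (starRl_total sA sB) as (s & Hs); exists s; eapply t_pi; eauto. Qed.

Lemma typS_lam D A M B sA sB : tS D A (Cst sA) -> tS (A :: D) B (Cst sB) ->
  tS (A :: D) M B -> tS D (Lam A M) (Pi A B).
Proof.
  intros HA HB HM; destruct (typS_pi _ _ _ _ _ HA HB) as (s & Hs).
  eapply t_lam; [exact I | exact HM | exact Hs].
Qed.

Lemma pi_code_body_typ D s1 s2 s3 : Rl s1 s2 s3 ->
  wS (Pi (Var 0) (Cst (Some s2)) :: Cst (Some s1) :: D) ->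
  tS (Pi (Var 0) (Cst (Some s2)) :: Cst (Some s1) :: D)
     (Pi (Var 1) (App (Var 1) (Var 0))) (Cst (Some s3)).
Proof.
  intros Hr W3.
  assert (HV1 : tS (Pi (Var 0) (Cst (Some s2)) :: Cst (Some s1) :: D) (Var 1) (Cst (Some s1)))
    by (apply (t_var _ _ _ _ _ _ _ 1 (Cst (Some s1))); auto).
  assert (W4 := wf_cons _ _ _ _ _ _ _ _ _ I HV1).
  eapply t_pi with (s1 := Some s1) (s2 := Some s2); [simpl; eauto | exact HV1 |].
  apply (t_app _ _ _ _ _ _ _ _ _ (Var 2) (Cst (Some s2)));
    [apply (t_var _ _ _ _ _ _ _ 1 (Pi (Var 0) (Cst (Some s2))))
    |apply (t_var _ _ _ _ _ _ _ 0 (Var 1))]; auto.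
Qed.

Lemma pi_code_typ D s1 s2 s3 : wS D -> Rl s1 s2 s3 ->
  tS D (pi_code s1 s2) (Pi (Cst (Some s1)) (Pi (Pi (Var 0) (Cst (Some s2))) (Cst (Some s3)))).
Proof.
  intros HD Hr.
  destruct (typS_sort D s1 HD) as (t1 & H1).
  assert (HV0 : tS (Cst (Some s1) :: D) (Var 0) (Cst (Some s1)))
    by (apply (t_var _ _ _ _ _ _ _ 0 (Cst (Some s1))); [econstructor|]; eauto).
  destruct (typS_sort _ s2 (wf_cons _ _ _ _ _ _ _ _ _ I HV0)) as (t2 & H2).
  destruct (typS_pi _ _ _ _ _ HV0 H2) as (r & Hfun).
  assert (W3 := wf_cons _ _ _ _ _ _ _ _ _ I Hfun).
  destruct (typS_sort _ s3 W3) as (t3 & H3).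
  destruct (typS_pi _ _ _ _ _ Hfun H3) as (r' & Hpi).
  eapply typS_lam; [exact H1 | exact Hpi |].
  eapply typS_lam; [exact Hfun | exact H3 | apply pi_code_body_typ; auto].
Qed.

End StarTyping.

Section Soundness.
Context {Srt : Type}.
Variables (Ax : Srt -> Srt -> Prop) (Rl : Srt -> Srt -> Srt -> Prop).
Notation tm := (term (LPC Srt)).
Notation tmS := (term (option Srt)).
Notation conv := (conv (LPC Srt) (LP_hd Ax Rl)).
Notation convS := (Defs.conv (option Srt) (fun _ _ : tmS => False)).
Notation typ := (typLP Ax Rl).
Notation tS := (typStar Ax Rl).
Notation wS := (wfStar Ax Rl).

Definition trk (t : tm) : tmS := tr (knorm t).
Definition tr_ctx (G : list tm) : list tmS := map trk G.

Lemma trk_conv A B : conv A B -> convS (trk A) (trk B).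
Proof. intro H; apply (tr_conv Ax Rl), conv_knorm, H. Qed.

Lemma is_eps_obj (X : tm) : lvl X = Some LObj -> is_eps X = false.
Proof. destruct X as [[]| | | |]; easy. Qed.

Lemma trk_app_obj M N : lvl M = Some LObj -> trk (App M N) = App (trk M) (trk N).
Proof.
  intro HM; unfold trk; simpl knorm.
  rewrite kapp_obj, tr_app_not_eps; auto using is_eps_obj, knorm_lvl.
Qed.

Lemma trk_subst_obj N B : lvl N = Some LObj -> trk (subst N B) = subst (trk N) (trk B).
Proof.
  intro HN; unfold trk, subst.
  rewrite knorm_subst, tr_subst; auto using is_eps_obj, knorm_lvl.
Qed.

Inductive fam_ok : list tmS -> tm -> tm -> Prop :=
| fam_type D F K : (exists s, tS D (tr F) (Cst s)) -> conv K (Cst cType) -> fam_ok D F K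
| fam_eps D s K : conv K (Pi (Cst (cU s)) (Cst cType)) -> fam_ok D (Cst (cEps s)) K
| fam_lam D A F A0 K K' : conv K (Pi A0 K') -> conv A0 A -> (exists s, tS D (tr A) (Cst s)) ->
    fam_ok (tr A :: D) F K' -> fam_ok D (Lam A F) K.

Lemma fam_ok_conv D F K K' : fam_ok D F K -> conv K K' -> fam_ok D F K'.
Proof.
  destruct 1; intro HKK'.
  - apply fam_type; eauto using conv_trans, conv_sym.
  - apply fam_eps; eauto using conv_trans, conv_sym.
  - eapply fam_lam; eauto using conv_trans, conv_sym.
Qed.

Lemma fam_ok_type D F : fam_ok D F (Cst cType) -> exists s, tS D (tr F) (Cst s).
Proof. inversion 1; subst; auto; destruct (cst_pi_not_conv _ _ _ _ _ ltac:(eassumption)). Qed.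

Lemma fam_ok_subst e F K : fam_ok e F K -> forall g (N : tm) T n f, tS g (tr N) T ->
  sub_in_env g (tr N) T n e f -> is_eps N = false ->
  fam_ok f (subst_rec N n F) (subst_rec N n K).
Proof.
  assert (Hsub : forall t u N k, conv t u -> conv (subst_rec N k t) (subst_rec N k u))
    by (intros; apply LP_conv_subst; auto using conv_refl).
  induction 1 as [D F K (s & HF) HK|D s K HK|D A F A0 K K' HK HA0 (s & HA) _ IH];
    intros g N T n f HN Hf HNe.
  - apply fam_type; [|exact (Hsub _ _ N n HK)].
    exists s. rewrite tr_subst by auto.
    exact (typS_substitution _ _ _ _ _ HF _ _ _ _ _ HN Hf).
  - apply fam_eps. exact (Hsub _ _ N n HK).
  - simpl. apply fam_lam with (A0 := subst_rec N n A0) (K' := subst_rec N (S n) K').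
    + exact (Hsub _ _ N n HK).
    + exact (Hsub _ _ N n HA0).
    + exists s. rewrite tr_subst by auto.
      exact (typS_substitution _ _ _ _ _ HA _ _ _ _ _ HN Hf).
    + rewrite tr_subst by auto. eapply IH; eauto using sub_S.
Qed.

Lemma fam_ok_app D F K N A B : wS D -> fam_ok D F K -> conv K (Pi A B) ->
  lvl F = Some LFam -> lvl N = Some LObj -> tS D (trk N) (trk A) ->
  fam_ok D (kapp F (knorm N)) (subst N B).
Proof.
  intros HD HF HKP LF LN HN.
  destruct HF as [D F K _ HK|D s K HK|D A' F' A0 K K' HK HA0 (sA & HA) HF'].
  - destruct (cst_pi_not_conv _ _ _ _ _ (conv_trans _ _ _ _ (conv_sym _ _ _ HK) HKP)).
  - destruct (conv_pi_inj _ _ _ _ _ _ (conv_trans _ _ _ _ (conv_sym _ _ _ HKP) HK))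
      as (HAu & HBt).
    apply fam_type.
    + destruct (typS_sort Ax Rl D s HD) as (t & Ht). exists (Some s).
      eapply t_conv; [exact HN | exact I | exact Ht | exact (trk_conv _ _ HAu)].
    + exact (LP_conv_subst _ _ _ _ _ _ 0 HBt (conv_refl _ N)).
  - destruct (conv_pi_inj _ _ _ _ _ _ (conv_trans _ _ _ _ (conv_sym _ _ _ HKP) HK))
      as (HAA0 & HBK).
    apply lvl_lam_inv in LF as (_ & [(E & _)|(_ & LF')]); [discriminate|].
    simpl; rewrite LF'.
    assert (HN' : tS D (tr (knorm N)) (tr A')).
    { eapply t_conv; [exact HN | exact I | exact HA |].
      apply (tr_conv Ax Rl). eauto using conv_trans, knorm_conv. }
    eapply fam_ok_conv; [eapply (fam_ok_subst _ _ _ HF' _ _ _ _ _ HN' (sub_O _ _ _))|].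
    + apply is_eps_obj, knorm_lvl, LN.
    + apply LP_conv_subst; [apply conv_sym, HBK | apply knorm_conv].
Qed.

Record sound (G : list tm) (M T : tm) : Prop := {
  sound_obj : lvl M = Some LObj -> tS (tr_ctx G) (trk M) (trk T);
  sound_fam : lvl M = Some LFam -> fam_ok (tr_ctx G) (knorm M) T;
  sound_kind : forall A B, M = Pi A B -> lvl M = Some LKind ->
    exists s, tS (tr_ctx G) (trk A) (Cst s) }.

Lemma sound_fam_type G A : lvl A = Some LFam -> sound G A (Cst cType) ->
  exists s, tS (tr_ctx G) (trk A) (Cst s).
Proof. intros LA HA; apply fam_ok_type, (sound_fam _ _ _ HA LA). Qed.

Lemma sound_sort G s1 s2 : LP_ax s1 s2 -> sound G (Cst s1) (Cst s2).
Proof. intros [-> ->]; split; discriminate. Qed.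

Lemma sound_sig G c T : wS (tr_ctx G) -> LP_sig Ax Rl c T -> sound G (Cst c) T.
Proof.
  intros HG Hc; destruct c; simpl in Hc; try contradiction; split; try discriminate.
  - intros _; subst. apply fam_type; [apply typS_sort; auto | apply conv_refl].
  - intros _; subst. apply fam_eps, conv_refl.
  - intros _; destruct Hc as (s2 & Hax & ->). apply t_sort; auto.
  - intros _; destruct Hc as (Hr & ->). apply pi_code_typ; auto.
Qed.

Lemma sound_var G n A : wS (tr_ctx G) -> nth_error G n = Some A -> sound G (Var n) (lift (S n) A).
Proof.
  intros HG Hn; split; try discriminate; intros _.
  unfold trk, lift; rewrite knorm_lift, tr_lift. apply t_var; auto.
  unfold tr_ctx; rewrite nth_error_map, Hn; reflexivity.
Qed.

Lemma sound_pi G A B s1 s2 s3 : fam_ctx G -> LP_rl s1 s2 s3 ->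
  typ G A (Cst s1) -> sound G A (Cst s1) ->
  typ (A :: G) B (Cst s2) -> (fam_ctx (A :: G) -> sound (A :: G) B (Cst s2)) ->
  sound G (Pi A B) (Cst s3).
Proof.
  intros HG Hr HA IHA HB IHB.
  assert (LA : lvl A = Some LFam)
    by (destruct Hr as [(-> & _)|(-> & _)]; eapply leveled_type, typ_leveled; eauto).
  assert (HG' := fam_ctx_cons _ _ LA HG).
  destruct Hr as [(-> & -> & ->)|(-> & -> & ->)].
  - destruct (sound_fam_type _ _ LA IHA) as (sA & HsA).
    assert (LB : lvl B = Some LFam) by (eapply leveled_type, typ_leveled; eauto).
    destruct (sound_fam_type _ _ LB (IHB HG')) as (sB & HsB).
    split; simpl; rewrite LA, LB; try discriminate.
    intros _; apply fam_type; [eapply typS_pi; eauto | apply conv_refl].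
  - assert (LB : lvl B = Some LKind) by (eapply leveled_kind, typ_leveled; eauto).
    split; simpl; rewrite ?LA, ?LB; try discriminate.
    intros A' B' [= <- <-] _. eapply sound_fam_type; eauto.
Qed.

Lemma sound_lam G A M B s : fam_ctx G -> LP_isSort s ->
  typ (A :: G) M B -> (fam_ctx (A :: G) -> sound (A :: G) M B) ->
  typ G (Pi A B) (Cst s) -> sound G (Pi A B) (Cst s) -> sound G (Lam A M) (Pi A B).
Proof.
  intros HG Hs HM IHM HP IHP.
  destruct (typ_leveled _ _ _ _ _ HP HG) as [E _|E Es|E Es];
    pose proof E as (LA & [(E' & LB)|(E' & LB)])%lvl_pi_inv; try discriminate;
    assert (HG' := fam_ctx_cons _ _ LA HG);
    destruct (typ_leveled _ _ _ _ _ HM HG') as [LM LB'|LM LB'|_ ->]; try congruence;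
    try (simpl in LB; discriminate).
  - assert (s = cType) as -> by (eapply leveled_sort_type; eauto using typ_leveled).
    destruct (sound_fam_type _ _ E IHP) as (sP & HsP).
    split; simpl; rewrite ?LA, ?LM; try discriminate; intros _.
    eapply t_lam; [exact I | apply (sound_obj _ _ _ (IHM HG') LM) | exact HsP].
  - split; simpl; rewrite ?LA, ?LM; try discriminate; intros _.
    eapply fam_lam with (A0 := A) (K' := B); [apply conv_refl | apply conv_sym, knorm_conv | |].
    + exact (sound_kind _ _ _ IHP A B eq_refl E).
    + exact (sound_fam _ _ _ (IHM HG') LM).
Qed.

Lemma sound_app G M N A B : fam_ctx G ->
  typ G M (Pi A B) -> sound G M (Pi A B) -> typ G N A -> sound G N A ->
  sound G (App M N) (subst N B).
Proof.
  intros HG HM IHM HN IHN; split; try discriminate.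
  - intros (LN & [(_ & LM)|(E & _)])%lvl_app_inv; [|discriminate].
    rewrite trk_app_obj, trk_subst_obj by auto.
    apply (t_app _ _ _ _ _ _ _ _ _ (trk A) (trk B));
      [exact (sound_obj _ _ _ IHM LM) | exact (sound_obj _ _ _ IHN LN)].
  - intros (LN & [(E & _)|(_ & LM)])%lvl_app_inv; [discriminate|].
    pose proof (sound_obj _ _ _ IHN LN) as HtN.
    eapply fam_ok_app; eauto using typS_wf, conv_refl, knorm_lvl, sound_fam.
Qed.

Lemma sound_conv G M A B s : fam_ctx G -> typ G M A -> sound G M A ->
  LP_isSort s -> typ G B (Cst s) -> sound G B (Cst s) -> conv A B -> sound G M B.
Proof.
  intros HG HM IHM Hs HB IHB HAB; split.
  - intro LM.
    destruct (leveled_conv _ _ _ _ _ _ (typ_leveled _ _ _ _ _ HM HG) Hs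
                (typ_leveled _ _ _ _ _ HB HG) HAB) as [_ LB|E _|E _]; try congruence.
    assert (s = cType) as -> by (eapply leveled_sort_type; eauto using typ_leveled).
    destruct (sound_fam_type _ _ LB IHB) as (sB & HsB).
    eapply t_conv; [exact (sound_obj _ _ _ IHM LM) | exact I | exact HsB | apply trk_conv, HAB].
  - intro LM; eapply fam_ok_conv; [exact (sound_fam _ _ _ IHM LM) | exact HAB].
  - apply (sound_kind _ _ _ IHM).
Qed.

Lemma tr_ctx_wf_cons G A s : fam_ctx (A :: G) -> LP_isSort s -> typ G A (Cst s) ->
  (fam_ctx G -> sound G A (Cst s)) -> wS (tr_ctx (A :: G)).
Proof.
  intros HG Hs HA IHA.
  assert (LA : lvl A = Some LFam) by (apply (HG 0); reflexivity).
  assert (HG' := fam_ctx_tail _ _ HG).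
  assert (s = cType) as -> by (eapply leveled_sort_type; eauto using typ_leveled).
  destruct (sound_fam_type _ _ LA (IHA HG')) as (sA & HsA).
  eapply wf_cons; [exact I | exact HsA].
Qed.

Lemma typ_sound G M T : typ G M T -> fam_ctx G -> sound G M T.
Proof.
  revert G M T.
  apply (typ_mind (LPC Srt) LP_isSort LP_ax LP_rl (LP_sig Ax Rl) (LP_hd Ax Rl)
           (fun G M T => fam_ctx G -> sound G M T) (fun G => fam_ctx G -> wS (tr_ctx G)));
    intros; try apply wf_nil;
    eauto using sound_sort, sound_sig, sound_var, sound_pi, sound_lam, sound_app, sound_conv,
                tr_ctx_wf_cons.
Qed.

End Soundness.

Section KindRedexFree.
Context {Srt : Type}.
Variables (Ax : Srt -> Srt -> Prop) (Rl : Srt -> Srt -> Srt -> Prop).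
Notation tm := (term (LPC Srt)).
Notation conv := (conv (LPC Srt) (LP_hd Ax Rl)).
Notation typ := (typLP Ax Rl).
Notation NKR := (NoKindRedex Ax Rl).

Lemma typLP_substitution G A M B N : typ (A :: G) M B -> typ G N A ->
  typ G (subst N M) (subst N B).
Proof.
  apply substitution; auto using LP_hd_lift, LP_hd_subst.
  - intros [] T k n HT; simpl in HT; try contradiction;
      [subst| subst | destruct HT as (? & ? & ->) | destruct HT as (? & ->)]; reflexivity.
  - intros [] T N' k HT; simpl in HT; try contradiction;
      [subst| subst | destruct HT as (? & ? & ->) | destruct HT as (? & ->)]; reflexivity.
  - intros s1 s2 s3 [(-> & _)|(-> & _)]; left; auto.
Qed.

Lemma sub_at_trans {K : Type} (G D E : list (term K)) t u w :
  sub_at G t D u -> sub_at D u E w -> sub_at G t E w.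
Proof. induction 1; eauto using sub_at. Qed.

Lemma no_kind_redex_sub G t D u : sub_at G t D u -> NKR G t -> NKR D u.
Proof.
  intros Hs H (E & B & C & P & T & HE & HT & HK).
  apply H; exists E, B, C, P, T; eauto using sub_at_trans.
Qed.

Lemma kind_level_redex D B C P T : fam_ctx D -> typ D (App (Lam B C) P) T ->
  lvl C = Some LFam -> exists T', typ D (App (Lam B C) P) T' /\ typ D T' (Cst cKind).
Proof.
  intros HD Ht LC.
  destruct (typ_app_inv _ _ _ _ _ _ _ _ _ Ht) as (X & Y & HL & HP & _).
  destruct (typ_lam_inv _ _ _ _ _ _ _ _ _ HL) as (C' & s & HC & HPi & (HBX & _)%conv_pi_inj).
  assert (LB : lvl B = Some LFam).
  { destruct (typ_leveled _ _ _ _ _ HPi HD) as [E _|E _|E _]; apply lvl_pi_inv in E; tauto. }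
  assert (HD' := fam_ctx_cons _ _ LB HD).
  assert (LC' : lvl C' = Some LKind)
    by (destruct (typ_leveled _ _ _ _ _ HC HD'); congruence).
  assert (s = cKind) as ->.
  { destruct (typ_leveled _ _ _ _ _ HPi HD) as [E _|E _|_ [= ->]]; auto;
      simpl in E; rewrite LB, LC' in E; discriminate. }
  destruct (typ_pi_inv _ _ _ _ _ _ _ _ _ HPi) as (s1 & s2 & s3 & Hr & HB1 & HC2 & _).
  destruct Hr as [(-> & -> & _)|(-> & -> & _)];
    [pose proof (leveled_type _ (typ_leveled _ _ _ _ _ HC2 HD')); congruence|].
  assert (HPB : typ D P B) by (eapply t_conv; [exact HP | left; auto | exact HB1 | apply conv_sym, HBX]).
  exists (subst P C'); split.
  - eapply t_app; [eapply t_lam; [right; auto | exact HC | exact HPi] | exact HPB].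
  - exact (typLP_substitution _ _ _ _ _ HC2 HPB).
Qed.

Lemma lam_app_kind_redex G B C v T : fam_ctx G -> typ G (App (Lam B C) v) T ->
  lvl C = Some LFam -> ~ NKR G (App (Lam B C) v).
Proof.
  intros HG Ht LC Hn. destruct (kind_level_redex _ _ _ _ _ HG Ht LC) as (T' & HT' & HK).
  apply Hn; exists G, B, C, v, T'; auto using sub_at.
Qed.

Lemma lvl_fam_of_type G M T : fam_ctx G -> typ G M T -> conv T (Cst cType) ->
  lvl M = Some LFam.
Proof.
  intros HG Ht HT; destruct (typ_leveled _ _ _ _ _ Ht HG) as [_ E|E _|_ ->]; auto.
  - discriminate (lvl_conv _ _ _ _ _ _ HT E eq_refl).
  - discriminate (conv_cst_inj _ _ _ _ HT).
Qed.

Lemma eps_type_not_type G s T : typ G (Cst (cEps s)) T -> ~ conv T (Cst cType).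
Proof.
  intros Ht HT.
  destruct (typ_cst_inv _ _ _ _ _ _ _ _ Ht) as [(? & (E & _) & _)|(T0 & HT0 & Hc0)];
    [discriminate|].
  simpl in HT0; subst. eapply cst_pi_not_conv, conv_sym, conv_trans; eauto.
Qed.

(* An application is excluded: by induction its head is [eps_s], whose applications have kind
   [Type], or an abstraction, which would make it a Kind-level redex. *)
Lemma fam_arrow_head G u T X Y : fam_ctx G -> typ G u T -> lvl u = Some LFam -> NKR G u ->
  conv T (Pi X Y) -> (exists s, u = Cst (cEps s)) \/ (exists B C, u = Lam B C).
Proof.
  revert G T X Y; induction u as [c|i|u1 IH1 u2 _|B _ C _|A _ B _];
    intros G T X Y HG Ht Lu Hn Hc; eauto.
  - destruct c; simpl in Lu; try discriminate; eauto.
    destruct (typ_cst_inv _ _ _ _ _ _ _ _ Ht) as [(? & (E & _) & _)|(T0 & HT0 & Hc0)];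
      [discriminate|].
    simpl in HT0; subst. destruct (cst_pi_not_conv _ _ _ _ _ (conv_trans _ _ _ _ Hc0 Hc)).
  - discriminate.
  - exfalso. apply lvl_app_inv in Lu as (_ & [(E & _)|(_ & L1)]); [discriminate|].
    destruct (typ_app_inv _ _ _ _ _ _ _ _ _ Ht) as (X' & Y' & H1 & H2 & H3).
    assert (Hn1 := no_kind_redex_sub _ _ _ _ (sa_appl _ _ _ _ _ (sa_here _ _)) Hn).
    destruct (IH1 _ _ _ _ HG H1 L1 Hn1 (conv_refl _ _)) as [(s & ->)|(B & C & ->)].
    + destruct (typ_cst_inv _ _ _ _ _ _ _ _ H1) as [(? & (E & _) & _)|(T0 & HT0 & Hc0)];
        [discriminate|].
      simpl in HT0; subst. destruct (conv_pi_inj _ _ _ _ _ _ Hc0) as (_ & HY).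
      apply (cst_pi_not_conv Ax Rl cType X Y).
      eapply conv_trans; [|exact Hc]. eapply conv_trans; [|exact H3].
      exact (LP_conv_subst _ _ (Cst cType) Y' u2 u2 0 HY (conv_refl _ _)).
    + apply lvl_lam_inv in L1 as (_ & [(E & _)|(_ & LC)]); [discriminate|].
      exact (lam_app_kind_redex _ _ _ _ _ HG Ht LC Hn).
  - destruct (typ_pi_inv _ _ _ _ _ _ _ _ _ Ht) as (s1 & s2 & s3 & _ & _ & _ & Hc3).
    destruct (cst_pi_not_conv _ _ _ _ _ (conv_trans _ _ _ _ Hc3 Hc)).
Qed.

Lemma kind_redex_free_syntax M G T : fam_ctx G -> typ G M T -> NKR G M ->
  (lvl M = Some LObj -> is_obj M) /\ (conv T (Cst cType) -> is_type M).
Proof.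
  revert G T; induction M as [c|i|u IHu v IHv|B IHB C IHC|A IHA B IHB];
    intros G T HG Ht Hn; split; intro HL;
    try pose proof (lvl_fam_of_type _ _ _ HG Ht HL) as LF.
  - destruct c; simpl in HL; try discriminate; constructor.
  - destruct c; simpl in LF; try discriminate; [constructor|].
    destruct (eps_type_not_type _ _ _ Ht HL).
  - constructor.
  - discriminate.
  - apply lvl_app_inv in HL as (Lv & [(_ & Lu)|(E & _)]); [|discriminate].
    destruct (typ_app_inv _ _ _ _ _ _ _ _ _ Ht) as (X & Y & H1 & H2 & _).
    constructor; [eapply IHu | eapply IHv]; eauto using no_kind_redex_sub, sub_at.
  - apply lvl_app_inv in LF as (Lv & [(E & _)|(_ & Lu)]); [discriminate|].
    destruct (typ_app_inv _ _ _ _ _ _ _ _ _ Ht) as (X & Y & H1 & H2 & _).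
    destruct (fam_arrow_head G u _ X Y HG H1 Lu) as [(s & ->)|(B & C & ->)];
      eauto using no_kind_redex_sub, sub_at, conv_refl.
    + constructor; eapply IHv; eauto using no_kind_redex_sub, sub_at.
    + apply lvl_lam_inv in Lu as (_ & [(E & _)|(_ & LC)]); [discriminate|].
      destruct (lam_app_kind_redex _ _ _ _ _ HG Ht LC Hn).
  - apply lvl_lam_inv in HL as (LB & [(_ & LC)|(E & _)]); [|discriminate].
    destruct (typ_lam_inv _ _ _ _ _ _ _ _ _ Ht) as (C' & s & HC & HPi & _).
    destruct (typ_pi_inv _ _ _ _ _ _ _ _ _ HPi) as (s1 & s2 & s3 & Hr & HB1 & _ & _).
    assert (s1 = cType) as -> by (destruct Hr as [(-> & _)|(-> & _)]; auto).
    constructor; [eapply IHB | eapply (IHC (B :: G))];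
      eauto using no_kind_redex_sub, sub_at, conv_refl, fam_ctx_cons.
  - destruct (typ_lam_inv _ _ _ _ _ _ _ _ _ Ht) as (C' & s & _ & _ & Hc).
    destruct (cst_pi_not_conv _ _ _ _ _ (conv_sym _ _ _ (conv_trans _ _ _ _ Hc HL))).
  - apply lvl_pi_inv in HL as (_ & [(E & _)|(E & _)]); discriminate.
  - destruct (typ_pi_inv _ _ _ _ _ _ _ _ _ Ht) as (s1 & s2 & s3 & Hr & HA1 & HB2 & Hc3).
    assert (s3 = cType) as -> by exact (conv_cst_inj _ _ _ _ (conv_trans _ _ _ _ Hc3 HL)).
    destruct Hr as [(-> & -> & _)|(_ & _ & E)]; [|discriminate].
    assert (LA : lvl A = Some LFam) by (eapply lvl_fam_of_type; eauto using conv_refl).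
    constructor; [eapply IHA | eapply (IHB (A :: G))];
      eauto using no_kind_redex_sub, sub_at, conv_refl, fam_ctx_cons.
Qed.

End KindRedexFree.

Section Contexts.
Context {Srt : Type}.
Variables (Ax : Srt -> Srt -> Prop) (Rl : Srt -> Srt -> Srt -> Prop).
Notation tm := (term (LPC Srt)).
Notation typ := (typLP Ax Rl).

Lemma is_obj_phi (M : tm) : is_obj M -> phi M = Some (trk M).
Proof.
  intro HM; unfold trk. rewrite (proj1 is_obj_type_knorm M HM). apply is_obj_type_tr, HM.
Qed.

Lemma is_type_psi (A : tm) : is_type A -> psi A = Some (trk A).
Proof.
  intro HA; unfold trk. rewrite (proj2 is_obj_type_knorm A HA). apply is_obj_type_tr, HA.
Qed.

Lemma psi_ctx_types (G : list tm) : (forall n A, nth_error G n = Some A -> is_type A) ->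
  psi_ctx G = Some (tr_ctx G).
Proof.
  induction G as [|A G IH]; intro HG; simpl; auto.
  rewrite (is_type_psi A (HG 0 A eq_refl)), IH; auto.
  intros n; apply (HG (S n)).
Qed.

Lemma kind_not_type G X : lvl X = Some LKind -> ~ typ G X (Cst cType).
Proof.
  revert G; induction X as [c|i|X1 _ X2 _|X1 _ X2 _|X1 _ X2 IH2];
    intros G HX Ht; simpl in HX; try discriminate.
  - destruct c; try discriminate.
    destruct (typ_cst_inv _ _ _ _ _ _ _ _ Ht) as [(s2 & (_ & ->) & Hc)|(T0 & HT0 & _)].
    + discriminate (conv_cst_inj _ _ _ _ Hc).
    + contradiction.
  - destruct (lvl X1) as [[]|], (lvl X2) as [[]|]; discriminate.
  - destruct (lvl X1) as [[]|], (lvl X2) as [[]|]; discriminate.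
  - destruct (typ_pi_inv _ _ _ _ _ _ _ _ _ Ht) as (s1 & s2 & s3 & Hr & _ & H2 & Hc).
    apply conv_cst_inj in Hc; subst.
    destruct Hr as [(_ & -> & _)|(_ & _ & E)]; [|discriminate].
    destruct (lvl X1) as [[]|], (lvl X2) as [[]|]; try discriminate. eapply IH2; eauto.
Qed.

Lemma wf_nth G n A : wfLP Ax Rl G -> nth_error G n = Some A ->
  exists s, LP_isSort s /\ typ (skipn (S n) G) A (Cst s).
Proof.
  revert n; induction G as [|B G IH]; intros [|n] HG E; simpl in E; try discriminate;
    inversion HG; subst.
  - injection E as ->; eauto.
  - apply (IH n); auto. eapply typ_wf; eauto.
Qed.

Lemma fam_ctx_of_wf G : wfLP Ax Rl G ->
  (forall n A, nth_error G n = Some A -> lvl A <> Some LKind) -> fam_ctx G.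
Proof.
  induction G as [|A G IH]; intros HG Hk.
  - intros [|n] B E; discriminate.
  - inversion HG as [|? ? s Hs HA]; subst.
    assert (HG' : fam_ctx G)
      by (apply IH; [eapply typ_wf; eauto | intros n; apply (Hk (S n))]).
    apply fam_ctx_cons; auto.
    destruct (typ_leveled _ _ _ _ _ HA HG') as [_ E|LA E|LA _].
    + destruct Hs as [-> | ->]; discriminate.
    + exact LA.
    + destruct (Hk 0 A eq_refl LA).
Qed.

Lemma object_ctx_types G : wfLP Ax Rl G -> object_ctx Ax Rl G ->
  (forall n T, nth_error G n = Some T -> LPminus Ax Rl (skipn (S n) G) T) ->
  fam_ctx G /\ psi_ctx G = Some (tr_ctx G).
Proof.
  intros Hwf Hobj HG.
  assert (HI : fam_ctx G).
  { apply fam_ctx_of_wf; auto. intros n A E LA.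
    apply (kind_not_type G (lift (S n) A)); [unfold lift; rewrite lvl_lift; auto|].
    apply Hobj, E. }
  split; auto. apply psi_ctx_types. intros n A E.
  destruct (wf_nth _ _ _ Hwf E) as (s & Hs & Ht).
  assert (HI' := fam_ctx_skipn _ (S n) HI).
  assert (s = cType) as -> by (eapply leveled_sort_type; eauto using typ_leveled).
  destruct (HG n A E) as (_ & Hn).
  apply (kind_redex_free_syntax _ _ _ _ _ HI' Ht Hn), conv_refl.
Qed.

Lemma tr_ctx_wf G : wfLP Ax Rl G -> fam_ctx G -> wfStar Ax Rl (tr_ctx G).
Proof.
  destruct 1 as [|G A s Hs HA]; intro HG; [apply wf_nil|].
  apply (tr_ctx_wf_cons _ _ _ _ _ HG Hs HA).
  intro; apply typ_sound; auto.
Qed.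

End Contexts.

Theorem lemma5p14 (Srt : Type) (Ax : Srt -> Srt -> Prop)
  (Rl : Srt -> Srt -> Srt -> Prop)
  (HF : functional_spec Ax Rl)
  (G : list (term (LPC Srt))) (M A : term (LPC Srt))
  (Hobj : object_ctx Ax Rl G)
  (HG : forall n T, nth_error G n = Some T -> LPminus Ax Rl (skipn (S n) G) T)
  (HM : NoKindRedex Ax Rl G M) (HA : NoKindRedex Ax Rl G A) :
  (wfLP Ax Rl G ->
     exists G', psi_ctx G = Some G' /\ wfStar Ax Rl G') /\
  (typLP Ax Rl G M A -> typLP Ax Rl G A (Cst cType) ->
     exists G' M' A', psi_ctx G = Some G' /\ phi M = Some M' /\
       psi A = Some A' /\ typStar Ax Rl G' M' A') /\
  (typLP Ax Rl G A (Cst cType) ->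
     exists G' A' (s : option Srt), psi_ctx G = Some G' /\
       psi A = Some A' /\ typStar Ax Rl G' A' (Cst s)).
Proof.
  assert (Hctx : wfLP Ax Rl G -> fam_ctx G /\ psi_ctx G = Some (tr_ctx G))
    by (intro Hwf; apply (object_ctx_types Ax Rl); auto).
  assert (Htype : typLP Ax Rl G A (Cst cType) ->
            fam_ctx G /\ psi_ctx G = Some (tr_ctx G) /\ lvl A = Some LFam /\
            psi A = Some (trk A)).
  { intro HAT. destruct (Hctx (typ_wf _ _ _ _ _ _ _ _ HAT)) as (HI & Hpsi).
    assert (LA := lvl_fam_of_type _ _ _ _ _ HI HAT (conv_refl _ _)).
    repeat split; auto.
    apply is_type_psi, (kind_redex_free_syntax _ _ _ _ _ HI HAT HA), conv_refl. }
  split; [|split].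
  - intro Hwf; destruct (Hctx Hwf) as (HI & Hpsi).
    exists (tr_ctx G); auto using tr_ctx_wf.
  - intros HMA HAT; destruct (Htype HAT) as (HI & Hpsi & LA & HpsiA).
    assert (LM : lvl M = Some LObj)
      by (destruct (typ_leveled _ _ _ _ _ HMA HI) as [|_ E|_ ->]; [auto | congruence | easy]).
    exists (tr_ctx G), (trk M), (trk A); repeat split; auto.
    + apply is_obj_phi, (kind_redex_free_syntax _ _ _ _ _ HI HMA HM), LM.
    + exact (sound_obj _ _ _ _ _ (typ_sound _ _ _ _ _ HMA HI) LM).
  - intros HAT; destruct (Htype HAT) as (HI & Hpsi & LA & HpsiA).
    destruct (sound_fam_type _ _ _ _ LA (typ_sound _ _ _ _ _ HAT HI)) as (s & Hs).
    exists (tr_ctx G), (trk A), s; auto.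
Qed.
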